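(* Let $\mathcal C$ be either a closed convex curve, or a convex arc with total curvature $\int_{\mathcal C}\kappa\,ds\le\pi$, and assume its radius of curvature satisfies $R_1\le\rho\le R_2$ at every point, for constants $0<R_1\le R_2$. Let $\mathcal L$ be a lattice in $\mathbb R^2$ and let $P_1',P_2',P_3'$ be distinct points of $\mathcal L$ with $\mathrm{dist}(P_j',\mathcal C)<\delta$ for $j=1,2,3$, where $\delta>0$ satisfies $$\delta<\frac{d_{\mathcal L}^2}{2\left(R_2+d_{\mathcal L}+\sqrt{(R_2+d_{\mathcal L})^2-d_{\mathcal L}^2}\right)},$$ and let $P_j$ be a point of $\mathcal C$ with $\|P_j-P_j'\|<\delta$ for $j=1,2,3$. Then $$\mathrm{Area}(\triangle P_1P_2P_3)\ge\frac{A_{\mathcal L}}{2}-\big(\|P_2-P_1\|+\|P_3-P_2\|\big)\delta-\frac32\delta^2.$$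
   Context: A lattice is a set $\mathcal L=\mathcal L(v_0,v_1,v_2)=\{v_0+mv_1+nv_2: m,n\in\mathbb Z\}$ where $v_0,v_1,v_2\in\mathbb R^2$ and $v_1,v_2$ are linearly independent; $A_{\mathcal L}=|\det(v_1,v_2)|$ and $d_{\mathcal L}=\min\{\|P-Q\|:P,Q\in\mathcal L,\ P\ne Q\}$. Curves are of class $C^2$ with nonvanishing first and second derivative vectors, oriented so that the curvature $\kappa$ is positive; a convex arc is such a non-closed curve on the boundary of a convex planar region. $\rho=1/\kappa$, $s$ is arclength, and $\mathrm{dist}(P,\mathcal C)$ is the Euclidean distance from $P$ to $\mathcal C$. *)

From Stdlib Require Import Reals ZArith.
From Coquelicot Require Import Coquelicot.
Open Scope R_scope.

Definition pt := (R * R)%type.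

Definition dist2 (P Q : pt) : R :=
  sqrt ((fst P - fst Q) ^ 2 + (snd P - snd Q) ^ 2).
Definition det2 (u v : pt) : R := fst u * snd v - snd u * fst v.
Definition vsub (P Q : pt) : pt := (fst P - fst Q, snd P - snd Q).

Definition tri_area (P1 P2 P3 : pt) : R :=
  Rabs (det2 (vsub P2 P1) (vsub P3 P1)) / 2.

Definition lattice_pt (v0 v1 v2 : pt) (P : pt) : Prop :=
  exists m n : Z,
    P = (fst v0 + IZR m * fst v1 + IZR n * fst v2,
         snd v0 + IZR m * snd v1 + IZR n * snd v2).

Definition lattice_area (v1 v2 : pt) : R := Rabs (det2 v1 v2).

Definition is_lattice_min_dist (v0 v1 v2 : pt) (d : R) : Prop :=
  (exists P Q, lattice_pt v0 v1 v2 P /\ lattice_pt v0 v1 v2 Q /\ P <> Q /\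
               dist2 P Q = d) /\
  (forall P Q, lattice_pt v0 v1 v2 P -> lattice_pt v0 v1 v2 Q -> P <> Q ->
               d <= dist2 P Q).

Definition convex_set (K : pt -> Prop) : Prop :=
  forall P Q (l : R), K P -> K Q -> 0 <= l <= 1 ->
    K ((1 - l) * fst P + l * fst Q, (1 - l) * snd P + l * snd Q).
Definition boundary (K : pt -> Prop) (P : pt) : Prop :=
  forall e, 0 < e ->
    (exists Q, K Q /\ dist2 P Q < e) /\ (exists Q, ~ K Q /\ dist2 P Q < e).
Definition nonempty_interior (K : pt -> Prop) : Prop :=
  exists P e, 0 < e /\ forall Q, dist2 P Q < e -> K Q.
Definition bounded_set (K : pt -> Prop) : Prop :=
  exists M, forall P, K P -> dist2 P (0, 0) <= M.

Definition C2_param (x y x1 y1 x2 y2 : R -> R) : Prop :=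
  forall t, is_derive x t (x1 t) /\ is_derive y t (y1 t) /\
            is_derive x1 t (x2 t) /\ is_derive y1 t (y2 t) /\
            continuous x2 t /\ continuous y2 t.

Definition regular_on (x1 y1 x2 y2 : R -> R) (a b : R) : Prop :=
  forall t, a <= t <= b -> (x1 t, y1 t) <> (0, 0) /\ (x2 t, y2 t) <> (0, 0).

Definition speed (x1 y1 : R -> R) (t : R) : R := sqrt (x1 t ^ 2 + y1 t ^ 2).

Definition curvature (x1 y1 x2 y2 : R -> R) (t : R) : R :=
  (x1 t * y2 t - y1 t * x2 t) / (speed x1 y1 t ^ 3).

Definition on_curve (x y : R -> R) (a b : R) (P : pt) : Prop :=
  exists t, a <= t <= b /\ P = (x t, y t).

Definition dist_curve (x y : R -> R) (a b : R) (P : pt) : Rbar :=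
  Glb_Rbar (fun r => exists t, a <= t <= b /\ r = dist2 P (x t, y t)).

Definition total_curvature (x1 y1 x2 y2 : R -> R) (a b : R) : R :=
  RInt (fun t => curvature x1 y1 x2 y2 t * speed x1 y1 t) a b.

Definition closed_convex_curve (x y : R -> R) (a b : R) : Prop :=
  a < b /\
  (forall t, x (t + (b - a)) = x t /\ y (t + (b - a)) = y t) /\
  (forall s t, a <= s < b -> a <= t < b -> (x s, y s) = (x t, y t) -> s = t) /\
  exists K : pt -> Prop, convex_set K /\ bounded_set K /\ nonempty_interior K /\
    forall P, boundary K P <-> on_curve x y a b P.

Definition convex_arc (x y : R -> R) (a b : R) : Prop :=
  a < b /\
  (forall s t, a <= s <= b -> a <= t <= b -> (x s, y s) = (x t, y t) -> s = t) /\
  exists K : pt -> Prop, convex_set K /\ nonempty_interior K /\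
    forall t, a <= t <= b -> boundary K (x t, y t).

(* If P1', P2', P3' are not collinear, twice the area of the lattice triangle is a nonzero
   integer multiple of A_L, and moving each vertex by less than delta changes it by at most
   2 delta (|P2 - P1| + |P3 - P2|) + 3 delta ^ 2.
   Collinear lattice points are excluded by curvature. Three distinct collinear lattice
   points are Xm - p u, Xm, Xm + q u with p, q >= d_L, so the curve would contain a chord
   from its point near Xm that is longer than d_L - 2 delta along u and shorter than
   2 delta across u. But in the unit tangent frame at any of its points, a convex curve
   with radius of curvature at most R2 has its chords inside the parabola
   tangential ^ 2 <= 2 R2 normal (on an arc this is shown for chords pointing ahead of the
   tangent, and the total curvature bound PI lets one choose such a chord), and the
   bound on delta is exactly what puts such a flat chord outside that parabola. *)

From Stdlib Require Import Reals ZArith Lra Psatz Classical.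
From Coquelicot Require Import Coquelicot.
Open Scope R_scope.

Lemma continuity_pt_of_is_derive (f : R -> R) (t l : R) : is_derive f t l -> continuity_pt f t.
Proof.
  intros Hf. apply continuity_pt_filterlim, (ex_derive_continuous f t).
  now exists l.
Qed.

Lemma is_derive_eq (f : R -> R) (t l l' : R) : is_derive f t l -> l = l' -> is_derive f t l'.
Proof. now intros Hf <-. Qed.

Section MeanValue.
Variables (f df : R -> R) (p q : R).
Hypothesis f_deriv : forall t, p <= t <= q -> is_derive f t (df t).

Lemma mvt_interval : p <= q -> exists c, p <= c <= q /\ f q - f p = df c * (q - p).
Proof.
  intros Hpq.
  destruct (MVT_gen f p q df) as [c [Hc Hmvt]];
    unfold Rmin, Rmax in *; destruct (Rle_dec p q); try lra.
  - intros t Ht. apply f_deriv. lra.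
  - intros t Ht. apply (continuity_pt_of_is_derive _ _ (df t)), f_deriv. lra.
  - now exists c.
Qed.

Lemma le_of_derive_nonneg :
  p <= q -> (forall t, p <= t <= q -> 0 <= df t) -> f p <= f q.
Proof.
  intros Hpq Hdf. destruct (mvt_interval Hpq) as [c [Hc Hmvt]].
  specialize (Hdf c Hc). nra.
Qed.

Lemma lt_of_derive_pos :
  p < q -> (forall t, p <= t <= q -> 0 < df t) -> f p < f q.
Proof.
  intros Hpq Hdf. destruct (mvt_interval (Rlt_le _ _ Hpq)) as [c [Hc Hmvt]].
  specialize (Hdf c Hc). nra.
Qed.

Lemma eq_of_derive_zero :
  p <= q -> (forall t, p <= t <= q -> df t = 0) -> f p = f q.
Proof.
  intros Hpq Hdf. destruct (mvt_interval Hpq) as [c [Hc Hmvt]].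
  rewrite (Hdf c Hc) in Hmvt. lra.
Qed.

End MeanValue.

Lemma continuity_pt_pos_near (f : R -> R) (t : R) : continuity_pt f t -> 0 < f t ->
  exists eta, 0 < eta /\ forall u, Rabs (u - t) < eta -> 0 < f u.
Proof.
  intros Hf Hpos. destruct (Hf (f t) Hpos) as [eta [Heta Hnear]].
  exists eta. split; [exact Heta|]. intros u Hu.
  destruct (Req_dec u t) as [->|Hne]; [exact Hpos|].
  assert (Hd : Rabs (f u - f t) < f t) by (apply (Hnear u); repeat split; auto).
  apply Rabs_def2 in Hd. lra.
Qed.

Lemma continuity_pt_neg_near (f : R -> R) (t : R) : continuity_pt f t -> f t < 0 ->
  exists eta, 0 < eta /\ forall u, Rabs (u - t) < eta -> f u < 0.
Proof.
  intros Hf Hneg.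
  destruct (continuity_pt_pos_near (fun u => - f u) t) as [eta [Heta Hnear]].
  - now apply continuity_pt_opp.
  - lra.
  - exists eta. split; [exact Heta|]. intros u Hu. specialize (Hnear u Hu). lra.
Qed.

Lemma first_zero (f : R -> R) (p t0 : R) :
  (forall t, continuity_pt f t) -> 0 < f p -> p <= t0 -> f t0 <= 0 ->
  exists s, p < s <= t0 /\ f s = 0 /\ forall t, p <= t < s -> 0 < f t.
Proof.
  intros Hf Hp Ht0 Hf0.
  set (S t := p <= t <= t0 /\ forall u, p <= u <= t -> 0 < f u).
  assert (S_le : forall t, S t -> t < t0).
  { intros t [Ht Hpos]. destruct (Rlt_le_dec t t0) as [|Hle]; [easy|].
    specialize (Hpos t0 ltac:(lra)). lra. }
  assert (Sp : S p) by (split; [lra|]; intros u Hu; now replace u with p by lra).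
  destruct (completeness S) as [s [Hub Hlub]].
  { exists t0. intros t St. apply Rlt_le, S_le, St. }
  { now exists p. }
  assert (Hps : p <= s) by now apply Hub.
  assert (Hst0 : s <= t0) by (apply Hlub; intros t St; apply Rlt_le, S_le, St).
  assert (below : forall t, p <= t < s -> 0 < f t).
  { intros t Ht. apply NNPP. intros Hnot.
    assert (s <= t); [|lra].
    apply Hlub. intros t' [Ht' Hpos]. destruct (Rle_lt_dec t' t); [easy|].
    exfalso. apply Hnot, Hpos. lra. }
  assert (Hnotpos : ~ 0 < f s).
  { intros Hs. destruct (continuity_pt_pos_near f s (Hf s) Hs) as [e [He Hnear]].
    set (t := Rmin (s + e / 2) t0).
    assert (St : S t).
    { split; [unfold t, Rmin; destruct Rle_dec; lra|].
      intros u Hu. destruct (Rlt_le_dec u s); [apply below; lra|].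
      apply Hnear, Rabs_def1; unfold t, Rmin in Hu; destruct Rle_dec; lra. }
    specialize (S_le t St). specialize (Hub t St).
    unfold t, Rmin in *; destruct Rle_dec; lra. }
  assert (Hsp : p < s).
  { destruct (Req_dec p s) as [<-|]; [easy|lra]. }
  assert (Hnotneg : ~ f s < 0).
  { intros Hs. destruct (continuity_pt_neg_near f s (Hf s) Hs) as [e [He Hnear]].
    set (t := Rmax p (s - e / 2)).
    assert (0 < f t) by (apply below; unfold t, Rmax; destruct Rle_dec; lra).
    assert (f t < 0) by (apply Hnear, Rabs_def1; unfold t, Rmax; destruct Rle_dec; lra).
    lra. }
  exists s. repeat split; try lra. auto.
Qed.

Section ParabolaEnvelope.
Variables (u v u1 v1 u2 v2 : R -> R) (L R2 : R).
Hypothesis L_pos : 0 < L.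
Hypothesis R2_pos : 0 < R2.
Hypothesis u_deriv : forall t, is_derive u t (u1 t).
Hypothesis v_deriv : forall t, is_derive v t (v1 t).
Hypothesis u1_deriv : forall t, is_derive u1 t (u2 t).
Hypothesis v1_deriv : forall t, is_derive v1 t (v2 t).
Hypothesis u_0 : u 0 = 0.
Hypothesis v_0 : v 0 = 0.
Hypothesis v1_0 : v1 0 = 0.
Hypothesis u1_0 : 0 < u1 0.
Hypothesis regular : forall t, 0 <= t <= L -> u1 t <> 0 \/ v1 t <> 0.
Hypothesis radius_le : forall t, 0 <= t <= L -> 0 < u1 t ->
  u1 t ^ 3 <= R2 * (u1 t * v2 t - v1 t * u2 t).

Let slope t := v1 t / u1 t.
Let slope' t := (v2 t * u1 t - v1 t * u2 t) / u1 t ^ 2.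

Section GraphPart.
Variable t0 : R.
Hypothesis t0_range : 0 <= t0 <= L.
Hypothesis u1_pos : forall t, 0 <= t <= t0 -> 0 < u1 t.

Lemma slope_deriv t : 0 <= t <= t0 -> is_derive slope t (slope' t).
Proof. intros Ht. apply is_derive_div; auto. pose proof (u1_pos t Ht). lra. Qed.

Lemma slope'_nonneg t : 0 <= t <= t0 -> 0 <= slope' t.
Proof.
  intros Ht. pose proof (u1_pos t Ht) as Hu1. pose proof (radius_le t ltac:(lra) Hu1).
  apply Rdiv_le_0_compat; [nra|apply pow_lt; lra].
Qed.

Lemma slope_nonneg : 0 <= slope t0.
Proof.
  replace 0 with (slope 0) by (unfold slope; rewrite v1_0; field; lra).
  apply (le_of_derive_nonneg slope slope'); try lra.
  - intros t Ht. apply slope_deriv. lra.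
  - intros t Ht. apply slope'_nonneg. lra.
Qed.

(* Curvature at least 1 / R2 makes the slope grow at least as fast as u / R2. *)
Lemma slope_ge t : 0 <= t <= t0 -> u t <= R2 * slope t.
Proof.
  intros Ht.
  enough (0 <= R2 * slope t - u t) by lra.
  replace 0 with (R2 * slope 0 - u 0) by (unfold slope; rewrite v1_0, u_0; field; lra).
  apply (le_of_derive_nonneg (fun t => R2 * slope t - u t)
           (fun t => R2 * slope' t - u1 t)); try lra.
  - intros s Hs. apply (is_derive_minus (fun t => R2 * slope t) u).
    + apply is_derive_scal, slope_deriv. lra.
    + apply u_deriv.
  - intros s Hs. pose proof (u1_pos s ltac:(lra)) as Hu1.
    pose proof (radius_le s ltac:(lra) Hu1).
    replace (R2 * slope' s - u1 s)
      with ((R2 * (u1 s * v2 s - v1 s * u2 s) - u1 s ^ 3) / u1 s ^ 2)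
      by (unfold slope'; field; lra).
    apply Rdiv_le_0_compat; [lra|apply pow_lt; lra].
Qed.

Lemma graph_above_parabola : u t0 ^ 2 <= 2 * R2 * v t0.
Proof.
  enough (0 <= v t0 - u t0 ^ 2 / (2 * R2)).
  { apply (Rmult_le_reg_r (/ (2 * R2))); [apply Rinv_0_lt_compat; lra|].
    replace (2 * R2 * v t0 * / (2 * R2)) with (v t0) by (field; lra). lra. }
  replace 0 with (v 0 - u 0 ^ 2 / (2 * R2)) by (rewrite v_0, u_0; field; lra).
  apply (le_of_derive_nonneg (fun t => v t - u t ^ 2 / (2 * R2))
           (fun t => u1 t * (R2 * slope t - u t) / R2)); try lra.
  - intros s Hs. pose proof (u1_pos s Hs).
    apply (is_derive_eq _ _ (v1 s - scal (/ (2 * R2)) (INR 2 * u1 s * u s ^ 1))).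
    + apply (is_derive_minus v (fun t => u t ^ 2 / (2 * R2))); [apply v_deriv|].
      apply (is_derive_ext (fun t => scal (/ (2 * R2)) (u t ^ 2))).
      { intros t. unfold scal; simpl; unfold mult; simpl. field. lra. }
      apply is_derive_scal, (is_derive_pow u 2 s (u1 s)), u_deriv.
    + unfold slope, scal; simpl; unfold mult; simpl. field. lra.
  - intros s Hs. pose proof (u1_pos s Hs). pose proof (slope_ge s Hs).
    apply Rdiv_le_0_compat; [nra|lra].
Qed.

Lemma tangent_line_gap : 0 <= v t0 - slope t0 * u t0 + R2 * slope t0 ^ 2 / 2.
Proof.
  replace 0 with (v 0 - slope 0 * u 0 + R2 * slope 0 ^ 2 / 2)
    by (unfold slope; rewrite v_0, u_0, v1_0; field; lra).
  apply (le_of_derive_nonneg (fun t => v t - slope t * u t + R2 * slope t ^ 2 / 2)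
           (fun t => slope' t * (R2 * slope t - u t))); try lra.
  - intros s Hs. pose proof (u1_pos s Hs). pose proof (slope_deriv s Hs) as Dm.
    apply (is_derive_eq _ _
      (v1 s - (slope' s * u s + slope s * u1 s) + R2 * (INR 2 * slope' s * slope s ^ 1) / 2)).
    + apply (is_derive_plus (fun t => v t - slope t * u t) (fun t => R2 * slope t ^ 2 / 2)).
      * apply (is_derive_minus v (fun t => slope t * u t)); [apply v_deriv|].
        apply (is_derive_mult slope u); [exact Dm|apply u_deriv|intros; apply Rmult_comm].
      * apply (is_derive_ext (fun t => scal (R2 / 2) (slope t ^ 2))).
        { intros t. unfold scal; simpl; unfold mult; simpl. field. }
        apply (is_derive_eq _ _ (scal (R2 / 2) (INR 2 * slope' s * slope s ^ 1))).
        { apply is_derive_scal, (is_derive_pow slope 2 s (slope' s)), Dm. }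
        unfold scal; simpl; unfold mult; simpl. field.
    + unfold slope. simpl. field. lra.
  - intros s Hs. apply Rmult_le_pos; [apply slope'_nonneg | pose proof (slope_ge s Hs)]; lra.
Qed.

End GraphPart.

Hypothesis left_of_tangents : forall s, 0 < s < L ->
  0 <= u1 s * (v L - v s) - v1 s * (u L - u s).
Hypothesis u_L_pos : 0 < u L.

Lemma v1_pos_at_first_vertical s1 : 0 < s1 <= L -> u1 s1 = 0 ->
  (forall t, 0 <= t < s1 -> 0 < u1 t) -> 0 < v1 s1.
Proof.
  intros Hs1 Hu1 Hbelow.
  destruct (regular s1 ltac:(lra)) as [|Hv1]; [easy|].
  destruct (Rtotal_order (v1 s1) 0) as [Hneg|[|]]; try easy.
  destruct (continuity_pt_neg_near v1 s1
              (continuity_pt_of_is_derive _ _ _ (v1_deriv s1)) Hneg) as [e [He Hnear]].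
  set (t := Rmax 0 (s1 - e / 2)).
  assert (Ht : 0 <= t < s1) by (unfold t, Rmax; destruct Rle_dec; lra).
  assert (v1 t < 0) by (apply Hnear, Rabs_def1; unfold t, Rmax; destruct Rle_dec; lra).
  assert (0 < u1 t) by auto.
  pose proof (slope_nonneg t ltac:(lra) ltac:(intros; apply Hbelow; lra)) as Hm.
  assert (0 < / u1 t) by (apply Rinv_0_lt_compat; lra).
  unfold slope, Rdiv in Hm. nra.
Qed.

Theorem parabola_envelope : u L ^ 2 <= 2 * R2 * v L.
Proof.
  destruct (classic (forall t, 0 <= t <= L -> 0 < u1 t)) as [Hall|Hnot].
  { apply (graph_above_parabola L); auto; lra. }
  assert (Ht0 : exists t0, 0 <= t0 <= L /\ u1 t0 <= 0).
  { apply NNPP. intros Hno. apply Hnot. intros t Ht.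
    apply Rnot_le_lt. intros Hle. apply Hno. now exists t. }
  destruct Ht0 as [t0 [Ht0 Hu1t0]].
  destruct (first_zero u1 0 t0) as [s1 [Hs1 [Hu1s1 Hbelow]]]; try easy.
  { intros t. exact (continuity_pt_of_is_derive _ _ _ (u1_deriv t)). }
  pose proof (v1_pos_at_first_vertical s1 ltac:(lra) Hu1s1 Hbelow) as Hv1s1.
  set (m := u L / R2).
  assert (Hm : 0 < m) by (apply Rdiv_lt_0_compat; lra).
  (* Before the first vertical tangent there is a point z where the slope is u L / R2;
     the endpoint lies above the tangent line at z. *)
  destruct (Ranalysis5.IVT_interv (fun t => v1 t - m * u1 t) 0 s1) as [z [Hz Hzero]];
    try lra.
  { intros t Ht. apply continuity_pt_minus; [|apply continuity_pt_scal];
      eapply continuity_pt_of_is_derive; auto. }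
  { rewrite v1_0. nra. }
  { rewrite Hu1s1. lra. }
  assert (Hz0 : z <> 0) by (intros ->; rewrite v1_0 in Hzero; nra).
  assert (Hzs1 : z <> s1) by (intros ->; rewrite Hu1s1 in Hzero; lra).
  assert (Hu1z : 0 < u1 z) by (apply Hbelow; lra).
  assert (Hmz : slope z = m) by (unfold slope; replace (v1 z) with (m * u1 z) by lra; field; lra).
  pose proof (tangent_line_gap z ltac:(lra) ltac:(intros; apply Hbelow; lra)) as Hgap.
  pose proof (left_of_tangents z ltac:(lra)) as Hleft.
  rewrite Hmz in Hgap.
  assert (Hv : v z + m * (u L - u z) <= v L).
  { replace (v1 z) with (m * u1 z) in Hleft by lra. nra. }
  assert (Hsq : u L ^ 2 = 2 * R2 * (m * u L - R2 * m ^ 2 / 2)) by (unfold m; field; lra).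
  rewrite Hsq. nra.
Qed.

End ParabolaEnvelope.

Definition second_derivatives (x y x1 y1 x2 y2 : R -> R) : Prop :=
  forall t, is_derive x t (x1 t) /\ is_derive y t (y1 t) /\
            is_derive x1 t (x2 t) /\ is_derive y1 t (y2 t).

Lemma C2_param_second_derivatives x y x1 y1 x2 y2 :
  C2_param x y x1 y1 x2 y2 -> second_derivatives x y x1 y1 x2 y2.
Proof. intros H t. specialize (H t). tauto. Qed.

Definition tangent_x (x1 y1 : R -> R) (t : R) : R := x1 t / speed x1 y1 t.
Definition tangent_y (x1 y1 : R -> R) (t : R) : R := y1 t / speed x1 y1 t.

Definition radius_le (x1 y1 x2 y2 : R -> R) (R2 t : R) : Prop :=
  0 < x1 t ^ 2 + y1 t ^ 2 /\ speed x1 y1 t ^ 3 <= R2 * (x1 t * y2 t - y1 t * x2 t).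

Definition left_of_tangent (x y x1 y1 : R -> R) (s : R) (P : pt) : Prop :=
  0 <= x1 s * (snd P - y s) - y1 s * (fst P - x s).

(* In the unit tangent frame at p, the chord from p to q lies in the parabola
   2 R2 * normal >= tangential ^ 2. *)
Definition chord_in_parabola (x y x1 y1 : R -> R) (R2 p q : R) : Prop :=
  (tangent_x x1 y1 p * (x q - x p) + tangent_y x1 y1 p * (y q - y p)) ^ 2 <=
  2 * R2 * (tangent_x x1 y1 p * (y q - y p) - tangent_y x1 y1 p * (x q - x p)).

Lemma speed_pos x1 y1 t : 0 < x1 t ^ 2 + y1 t ^ 2 -> 0 < speed x1 y1 t.
Proof. apply sqrt_lt_R0. Qed.

Lemma unit_tangent x1 y1 t : 0 < x1 t ^ 2 + y1 t ^ 2 ->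
  tangent_x x1 y1 t ^ 2 + tangent_y x1 y1 t ^ 2 = 1 /\
  tangent_x x1 y1 t * y1 t - tangent_y x1 y1 t * x1 t = 0 /\
  0 < tangent_x x1 y1 t * x1 t + tangent_y x1 y1 t * y1 t.
Proof.
  intros Hreg. pose proof (speed_pos x1 y1 t Hreg) as Hs.
  assert (Hs2 : speed x1 y1 t ^ 2 = x1 t ^ 2 + y1 t ^ 2) by (apply pow2_sqrt; lra).
  unfold tangent_x, tangent_y. repeat split.
  - field_simplify; [rewrite Hs2; field|]; lra.
  - field. lra.
  - replace (x1 t / speed x1 y1 t * x1 t + y1 t / speed x1 y1 t * y1 t)
      with ((x1 t ^ 2 + y1 t ^ 2) / speed x1 y1 t) by (field; lra).
    now apply Rdiv_lt_0_compat.
Qed.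

Lemma tangent_normal_nonneg x y x1 y1 p Q : 0 < x1 p ^ 2 + y1 p ^ 2 ->
  left_of_tangent x y x1 y1 p Q ->
  0 <= tangent_x x1 y1 p * (snd Q - y p) - tangent_y x1 y1 p * (fst Q - x p).
Proof.
  intros Hreg Hleft. pose proof (speed_pos x1 y1 p Hreg).
  unfold tangent_x, tangent_y, left_of_tangent in *.
  replace (x1 p / speed x1 y1 p * (snd Q - y p) - y1 p / speed x1 y1 p * (fst Q - x p))
    with ((x1 p * (snd Q - y p) - y1 p * (fst Q - x p)) / speed x1 y1 p) by (field; lra).
  now apply Rdiv_le_0_compat.
Qed.

Lemma chord_in_parabola_orthogonal x y x1 y1 R2 p q :
  0 < R2 -> 0 < x1 p ^ 2 + y1 p ^ 2 -> left_of_tangent x y x1 y1 p (x q, y q) ->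
  tangent_x x1 y1 p * (x q - x p) + tangent_y x1 y1 p * (y q - y p) = 0 ->
  chord_in_parabola x y x1 y1 R2 p q.
Proof.
  intros HR2 Hreg Hleft Horth. unfold chord_in_parabola. rewrite Horth.
  pose proof (tangent_normal_nonneg x y x1 y1 p (x q, y q) Hreg Hleft). simpl in *. nra.
Qed.

Lemma is_derive_frame_coord (f g df dg : R -> R) (c d p k1 k2 sg : R) :
  (forall t, is_derive f t (df t)) -> (forall t, is_derive g t (dg t)) ->
  forall t, is_derive (fun t => c * (f (p + sg * t) - k1) + d * (g (p + sg * t) - k2)) t
     (sg * (c * df (p + sg * t) + d * dg (p + sg * t))).
Proof.
  intros Hf Hg t. auto_derive.
  - split; [exists (df (p + sg * t))|split; [exists (dg (p + sg * t))|]]; easy.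
  - rewrite (is_derive_unique _ _ _ (Hf _)), (is_derive_unique _ _ _ (Hg _)). ring.
Qed.

Lemma frame_det (tx ty a1 a2 b1 b2 : R) :
  (tx * a1 + ty * a2) * (tx * b2 - ty * b1) - (tx * a2 - ty * a1) * (tx * b1 + ty * b2)
  = (tx ^ 2 + ty ^ 2) * (a1 * b2 - a2 * b1).
Proof. ring. Qed.

Lemma frame_norm (tx ty a1 a2 : R) :
  (tx * a1 + ty * a2) ^ 2 + (tx * a2 - ty * a1) ^ 2 = (tx ^ 2 + ty ^ 2) * (a1 ^ 2 + a2 ^ 2).
Proof. ring. Qed.

Lemma along_le_norm tx ty a1 a2 : tx ^ 2 + ty ^ 2 = 1 ->
  tx * a1 + ty * a2 <= sqrt (a1 ^ 2 + a2 ^ 2).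
Proof.
  intros Hu. destruct (Rle_lt_dec (tx * a1 + ty * a2) 0).
  - pose proof (sqrt_pos (a1 ^ 2 + a2 ^ 2)). lra.
  - rewrite <- (sqrt_pow2 (tx * a1 + ty * a2)) by lra. apply sqrt_le_1_alt.
    pose proof (frame_norm tx ty a1 a2). pose proof (pow2_ge_0 (tx * a2 - ty * a1)).
    rewrite Hu in *. lra.
Qed.

Lemma frame_det_sign (tx ty sg a1 a2 b1 b2 : R) : tx ^ 2 + ty ^ 2 = 1 -> sg * sg = 1 ->
  (tx * a1 + ty * a2) * (tx * b2 + - ty * b1) -
  sg * (tx * a2 + - ty * a1) * (sg * (tx * b1 + ty * b2)) = a1 * b2 - a2 * b1.
Proof.
  intros Ht Hsg.
  replace ((tx * a1 + ty * a2) * (tx * b2 + - ty * b1) -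
           sg * (tx * a2 + - ty * a1) * (sg * (tx * b1 + ty * b2)))
    with ((tx * a1 + ty * a2) * (tx * b2 - ty * b1) -
          (sg * sg) * ((tx * a2 - ty * a1) * (tx * b1 + ty * b2))) by ring.
  rewrite Hsg, Rmult_1_l, frame_det, Ht. ring.
Qed.

Lemma frame_regular tx ty sg a1 a2 : tx ^ 2 + ty ^ 2 = 1 -> (sg = 1 \/ sg = -1) ->
  0 < a1 ^ 2 + a2 ^ 2 -> tx * a1 + ty * a2 <> 0 \/ sg * (tx * a2 + - ty * a1) <> 0.
Proof.
  intros Ht Hsg Ha. pose proof (frame_norm tx ty a1 a2) as Hn. rewrite Ht in Hn.
  destruct (Req_dec (tx * a1 + ty * a2) 0) as [E|E]; [right|now left].
  intros E'. apply Rmult_integral in E'.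
  assert (tx * a2 - ty * a1 = 0) by (destruct E', Hsg; lra). nra.
Qed.

Lemma frame_radius_le tx ty sg a1 a2 b1 b2 R2 : tx ^ 2 + ty ^ 2 = 1 -> sg * sg = 1 ->
  sqrt (a1 ^ 2 + a2 ^ 2) ^ 3 <= R2 * (a1 * b2 - a2 * b1) -> 0 < tx * a1 + ty * a2 ->
  (tx * a1 + ty * a2) ^ 3 <=
  R2 * ((tx * a1 + ty * a2) * (tx * b2 + - ty * b1) -
        sg * (tx * a2 + - ty * a1) * (sg * (tx * b1 + ty * b2))).
Proof.
  intros Ht Hsg Hk Hpos. rewrite frame_det_sign by easy.
  eapply Rle_trans; [|exact Hk]. apply pow_incr. split; [lra|]. now apply along_le_norm.
Qed.

Section TangentFrame.
Variables (x y x1 y1 x2 y2 : R -> R) (R2 : R).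
Hypothesis derivs : second_derivatives x y x1 y1 x2 y2.
Hypothesis R2_pos : 0 < R2.

Lemma frame_derivatives p sg tx ty : sg * sg = 1 ->
  (forall t, is_derive (fun t => sg * (tx * (x (p + sg * t) - x p) + ty * (y (p + sg * t) - y p)))
               t (tx * x1 (p + sg * t) + ty * y1 (p + sg * t))) /\
  (forall t, is_derive (fun t => tx * (y (p + sg * t) - y p) + - ty * (x (p + sg * t) - x p))
               t (sg * (tx * y1 (p + sg * t) + - ty * x1 (p + sg * t)))) /\
  (forall t, is_derive (fun t => tx * x1 (p + sg * t) + ty * y1 (p + sg * t))
               t (sg * (tx * x2 (p + sg * t) + ty * y2 (p + sg * t)))) /\
  (forall t, is_derive (fun t => sg * (tx * y1 (p + sg * t) + - ty * x1 (p + sg * t)))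
               t (tx * y2 (p + sg * t) + - ty * x2 (p + sg * t))).
Proof.
  intros sg2.
  assert (dx : forall t, is_derive x t (x1 t)) by apply derivs.
  assert (dy : forall t, is_derive y t (y1 t)) by apply derivs.
  assert (dx1 : forall t, is_derive x1 t (x2 t)) by apply derivs.
  assert (dy1 : forall t, is_derive y1 t (y2 t)) by apply derivs.
  split; [|split; [|split]]; intros t.
  - apply (is_derive_eq _ _ (sg * (sg * (tx * x1 (p + sg * t) + ty * y1 (p + sg * t))))).
    + apply is_derive_scal, (is_derive_frame_coord x y x1 y1); auto.
    + rewrite <- Rmult_assoc, sg2. ring.
  - now apply is_derive_frame_coord.
  - apply (is_derive_ext
      (fun t => tx * (x1 (p + sg * t) - 0) + ty * (y1 (p + sg * t) - 0))).
    { intros s; simpl. ring. }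
    now apply (is_derive_frame_coord x1 y1 x2 y2).
  - apply (is_derive_eq _ _ (sg * (sg * (tx * y2 (p + sg * t) + - ty * x2 (p + sg * t))))).
    + apply is_derive_scal.
      apply (is_derive_ext
        (fun t => tx * (y1 (p + sg * t) - 0) + - ty * (x1 (p + sg * t) - 0))).
      { intros s; simpl. ring. }
      now apply (is_derive_frame_coord y1 x1 y2 x2).
    + rewrite <- Rmult_assoc, sg2. ring.
Qed.

(* The envelope lemma applied to the curve read from p in direction sg, in coordinates
   (sg * tangential, normal) of the unit tangent frame at p. *)
Lemma chord_in_parabola_dir p q sg :
  (sg = 1 \/ sg = -1) -> 0 < sg * (q - p) ->
  (forall t, Rmin p q <= t <= Rmax p q -> radius_le x1 y1 x2 y2 R2 t) ->
  (forall s, Rmin p q < s < Rmax p q -> left_of_tangent x y x1 y1 s (x q, y q)) ->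
  0 < sg * (tangent_x x1 y1 p * (x q - x p) + tangent_y x1 y1 p * (y q - y p)) ->
  chord_in_parabola x y x1 y1 R2 p q.
Proof.
  intros Hsg Hdir Hrad Hleft Hpos.
  assert (sg2 : sg * sg = 1) by (destruct Hsg; subst; ring).
  set (L := sg * (q - p)).
  assert (HqL : p + sg * L = q) by (unfold L; rewrite <- Rmult_assoc, sg2; ring).
  assert (Hrange : forall t, 0 <= t <= L -> Rmin p q <= p + sg * t <= Rmax p q).
  { intros t Ht. unfold Rmin, Rmax, L in *. destruct Hsg; subst sg; destruct Rle_dec; lra. }
  assert (Hrange' : forall t, 0 < t < L -> Rmin p q < p + sg * t < Rmax p q).
  { intros t Ht. unfold Rmin, Rmax, L in *. destruct Hsg; subst sg; destruct Rle_dec; lra. }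
  destruct (Hrad p ltac:(unfold Rmin, Rmax; destruct Rle_dec; lra)) as [Hreg _].
  destruct (unit_tangent x1 y1 p Hreg) as [Hunit [Hnormal Htangent]].
  set (tx := tangent_x x1 y1 p) in *. set (ty := tangent_y x1 y1 p) in *.
  destruct (frame_derivatives p sg tx ty sg2) as [dU [dV [dU1 dV1]]].
  set (U t := sg * (tx * (x (p + sg * t) - x p) + ty * (y (p + sg * t) - y p))) in *.
  set (V t := tx * (y (p + sg * t) - y p) + - ty * (x (p + sg * t) - x p)) in *.
  set (U1 t := tx * x1 (p + sg * t) + ty * y1 (p + sg * t)) in *.
  set (V1 t := sg * (tx * y1 (p + sg * t) + - ty * x1 (p + sg * t))) in *.
  set (U2 t := sg * (tx * x2 (p + sg * t) + ty * y2 (p + sg * t))) in *.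
  set (V2 t := tx * y2 (p + sg * t) + - ty * x2 (p + sg * t)) in *.
  assert (Hregular : forall t, 0 <= t <= L -> U1 t <> 0 \/ V1 t <> 0).
  { intros t Ht. apply frame_regular; try easy. apply (Hrad _ (Hrange t Ht)). }
  assert (Hbend : forall t, 0 <= t <= L -> 0 < U1 t ->
            U1 t ^ 3 <= R2 * (U1 t * V2 t - V1 t * U2 t)).
  { intros t Ht HU1. apply frame_radius_le; try easy. apply (Hrad _ (Hrange t Ht)). }
  assert (Hleft' : forall s, 0 < s < L -> 0 <= U1 s * (V L - V s) - V1 s * (U L - U s)).
  { intros s Hs. specialize (Hleft _ (Hrange' s Hs)).
    unfold left_of_tangent in Hleft. simpl in Hleft.
    replace (V L - V s) with (tx * (y q - y (p + sg * s)) + - ty * (x q - x (p + sg * s)))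
      by (unfold V; rewrite HqL; ring).
    replace (U L - U s) with (sg * (tx * (x q - x (p + sg * s)) + ty * (y q - y (p + sg * s))))
      by (unfold U; rewrite HqL; ring).
    unfold U1, V1. rewrite frame_det_sign by easy. lra. }
  assert (HUL : U L = sg * (tx * (x q - x p) + ty * (y q - y p)))
    by (unfold U; now rewrite HqL).
  assert (HVL : V L = tx * (y q - y p) - ty * (x q - x p)) by (unfold V; rewrite HqL; ring).
  unfold chord_in_parabola. fold tx ty. rewrite <- HVL.
  replace ((tx * (x q - x p) + ty * (y q - y p)) ^ 2) with (U L ^ 2)
    by (rewrite HUL, Rpow_mult_distr; replace (sg ^ 2) with (sg * sg) by ring;
        rewrite sg2; ring).
  apply (parabola_envelope U V U1 V1 U2 V2 L R2); try easy.
  - unfold U. rewrite Rmult_0_r, Rplus_0_r. ring.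
  - unfold V. rewrite Rmult_0_r, Rplus_0_r. ring.
  - unfold V1. rewrite Rmult_0_r, Rplus_0_r. replace (tx * y1 p + - ty * x1 p) with 0 by lra.
    ring.
  - unfold U1. rewrite Rmult_0_r, Rplus_0_r. exact Htangent.
  - now rewrite HUL.
Qed.

End TangentFrame.

Definition adherent (K : pt -> Prop) (P : pt) : Prop :=
  forall e, 0 < e -> exists Q, K Q /\ dist2 P Q < e.

Lemma boundary_adherent K P : boundary K P -> adherent K P.
Proof. intros HP e He. apply (HP e He). Qed.

Definition orient (A B Z : pt) : R := det2 (vsub A Z) (vsub B Z).

Lemma dist2_coord_lt P Q e : dist2 P Q < e ->
  Rabs (fst P - fst Q) < e /\ Rabs (snd P - snd Q) < e.
Proof.
  unfold dist2. intros Hd. pose proof (sqrt_plus_sqr (fst P - fst Q) (snd P - snd Q)).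
  unfold Rmax in *. destruct Rle_dec; lra.
Qed.

Lemma div_in_unit_interval p q : 0 <= p -> p <= q -> 0 < q -> 0 <= p / q <= 1.
Proof.
  intros. split; [now apply Rdiv_le_0_compat|].
  apply (Rmult_le_reg_r q); [easy|]. unfold Rdiv. rewrite Rmult_assoc, Rinv_l; lra.
Qed.

(* Z is a convex combination of A1 and of a point of the side A2 A3, with weights
   read off the three orientations. *)
Lemma convex_triangle_mem (K : pt -> Prop) A1 A2 A3 Z : convex_set K ->
  K A1 -> K A2 -> K A3 ->
  orient A1 A2 Z < 0 -> orient A2 A3 Z < 0 -> orient A3 A1 Z < 0 -> K Z.
Proof.
  intros Hconv K1 K2 K3 o12 o23 o31.
  destruct A1 as [a1 b1], A2 as [a2 b2], A3 as [a3 b3], Z as [z1 z2].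
  unfold orient, det2, vsub in *; simpl in *.
  set (l1 := (a2 - z1) * (b3 - z2) - (b2 - z2) * (a3 - z1)) in *.
  set (l2 := (a3 - z1) * (b1 - z2) - (b3 - z2) * (a1 - z1)) in *.
  set (l3 := (a1 - z1) * (b2 - z2) - (b1 - z2) * (a2 - z1)) in *.
  set (l := (- l3) / (- l2 - l3)).
  assert (Hl : 0 <= l <= 1) by (apply div_in_unit_interval; lra).
  pose proof (Hconv _ _ l K2 K3 Hl) as K23. simpl in K23.
  set (l' := (- l2 - l3) / (- l1 - l2 - l3)).
  assert (Hl' : 0 <= l' <= 1) by (apply div_in_unit_interval; lra).
  pose proof (Hconv _ _ l' K1 K23 Hl') as KZ. simpl in KZ.
  replace (z1, z2) with ((1 - l') * a1 + l' * ((1 - l) * a2 + l * a3),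
                        (1 - l') * b1 + l' * ((1 - l) * b2 + l * b3)); [easy|].
  unfold l', l, l1, l2, l3. f_equal; field; fold l1 l2 l3; lra.
Qed.

Lemma det_perturb_le a1 a2 b1 b2 ea1 ea2 eb1 eb2 M z :
  Rabs a1 <= M -> Rabs a2 <= M -> Rabs b1 <= M -> Rabs b2 <= M -> z <= 1 ->
  Rabs ea1 <= 2 * z -> Rabs ea2 <= 2 * z -> Rabs eb1 <= 2 * z -> Rabs eb2 <= 2 * z ->
  (a1 + ea1) * (b2 + eb2) - (a2 + ea2) * (b1 + eb1) <= a1 * b2 - a2 * b1 + 8 * (M + 1) * z.
Proof.
  intros Ha1 Ha2 Hb1 Hb2 Hz Hea1 Hea2 Heb1 Heb2.
  assert (Bound : forall c e m, Rabs c <= m -> Rabs e <= 2 * z -> c * e <= m * (2 * z)).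
  { intros c e m Hc He. eapply Rle_trans; [apply RRle_abs|]. rewrite Rabs_mult.
    apply Rmult_le_compat; auto using Rabs_pos. }
  assert (0 <= z) by (pose proof (Rabs_pos ea1); lra).
  pose proof (Bound a1 eb2 M Ha1 Heb2). pose proof (Bound b2 ea1 M Hb2 Hea1).
  pose proof (Bound ea1 eb2 (2 * z) Hea1 Heb2).
  pose proof (Bound (- a2) eb1 M ltac:(now rewrite Rabs_Ropp) Heb1).
  pose proof (Bound (- b1) ea2 M ltac:(now rewrite Rabs_Ropp) Hea2).
  pose proof (Bound (- ea2) eb1 (2 * z) ltac:(now rewrite Rabs_Ropp) Heb1).
  nra.
Qed.

Lemma orient_neg_stable A B Z : orient A B Z < 0 ->
  exists z, 0 < z /\ forall A' B' Z',
    dist2 A A' < z -> dist2 B B' < z -> dist2 Z Z' < z -> orient A' B' Z' < 0.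
Proof.
  intros Ho. unfold orient, det2, vsub in *. cbn [fst snd] in *.
  set (a1 := fst A - fst Z) in *. set (a2 := snd A - snd Z) in *.
  set (b1 := fst B - fst Z) in *. set (b2 := snd B - snd Z) in *.
  set (M := Rabs a1 + Rabs a2 + Rabs b1 + Rabs b2).
  pose proof (Rabs_pos a1). pose proof (Rabs_pos a2).
  pose proof (Rabs_pos b1). pose proof (Rabs_pos b2).
  set (z := Rmin 1 (- (a1 * b2 - a2 * b1) / (16 * (M + 1)))).
  assert (Hz : 0 < z).
  { apply Rmin_glb_lt; [lra|]. apply Rdiv_lt_0_compat; unfold M; lra. }
  assert (Hz2 : z * (16 * (M + 1)) <= - (a1 * b2 - a2 * b1)).
  { assert (Hle : z <= - (a1 * b2 - a2 * b1) / (16 * (M + 1))) by apply Rmin_r.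
    apply (Rmult_le_compat_r (16 * (M + 1))) in Hle; [|unfold M; lra].
    unfold Rdiv in Hle. rewrite Rmult_assoc, Rinv_l in Hle; unfold M in *; lra. }
  exists z. split; [easy|]. intros A' B' Z' HA HB HZ. cbn [fst snd].
  apply dist2_coord_lt in HA, HB, HZ.
  destruct HA as [HA1 HA2], HB as [HB1 HB2], HZ as [HZ1 HZ2].
  assert (E : forall w w' v v', Rabs (w - w') < z -> Rabs (v - v') < z ->
                Rabs ((w' - v') - (w - v)) <= 2 * z).
  { intros. rewrite <- Rabs_Ropp.
    replace (- (w' - v' - (w - v))) with ((w - w') - (v - v')) by ring.
    unfold Rminus at 1. eapply Rle_trans; [apply Rabs_triang|].
    rewrite Rabs_Ropp. lra. }
  pose proof (det_perturb_le a1 a2 b1 b2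
    ((fst A' - fst Z') - a1) ((snd A' - snd Z') - a2)
    ((fst B' - fst Z') - b1) ((snd B' - snd Z') - b2) M z) as Hpert.
  replace (a1 + (fst A' - fst Z' - a1)) with (fst A' - fst Z') in Hpert by ring.
  replace (a2 + (snd A' - snd Z' - a2)) with (snd A' - snd Z') in Hpert by ring.
  replace (b1 + (fst B' - fst Z' - b1)) with (fst B' - fst Z') in Hpert by ring.
  replace (b2 + (snd B' - snd Z' - b2)) with (snd B' - snd Z') in Hpert by ring.
  assert (Hsmall : 8 * (M + 1) * z < - (a1 * b2 - a2 * b1)) by (unfold M in *; lra).
  eapply Rle_lt_trans; [apply Hpert|lra];
    solve [unfold M; lra | apply Rmin_l | apply E; easy].
Qed.

Lemma convex_triangle_interior (K : pt -> Prop) A1 A2 A3 Z : convex_set K ->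
  adherent K A1 -> adherent K A2 -> adherent K A3 ->
  orient A1 A2 Z < 0 -> orient A2 A3 Z < 0 -> orient A3 A1 Z < 0 ->
  exists e, 0 < e /\ forall Q, dist2 Z Q < e -> K Q.
Proof.
  intros Hconv H1 H2 H3 o12 o23 o31.
  destruct (orient_neg_stable _ _ _ o12) as [z1 [Hz1 S12]].
  destruct (orient_neg_stable _ _ _ o23) as [z2 [Hz2 S23]].
  destruct (orient_neg_stable _ _ _ o31) as [z3 [Hz3 S31]].
  set (z := Rmin z1 (Rmin z2 z3)).
  assert (Hz : 0 < z) by (repeat apply Rmin_glb_lt; lra).
  assert (Hzz : z <= z1 /\ z <= z2 /\ z <= z3).
  { unfold z. repeat split;
      [apply Rmin_l| eapply Rle_trans; [apply Rmin_r|]..]; [apply Rmin_l|apply Rmin_r]. }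
  destruct (H1 z Hz) as [K1 [HK1 D1]].
  destruct (H2 z Hz) as [K2 [HK2 D2]].
  destruct (H3 z Hz) as [K3 [HK3 D3]].
  exists z. split; [easy|]. intros Q HQ.
  apply (convex_triangle_mem K K1 K2 K3 Q Hconv HK1 HK2 HK3);
    [apply S12|apply S23|apply S31]; lra.
Qed.

Lemma chord_tangent_expansion (x y : R -> R) (s tx ty : R) :
  derivable_pt_lim x s tx -> derivable_pt_lim y s ty ->
  forall r, 0 < r -> exists eta, 0 < eta /\ forall e, e <> 0 -> Rabs e < eta ->
    Rabs (tx * (x (s + e) - x s) + ty * (y (s + e) - y s) - e * (tx ^ 2 + ty ^ 2))
      <= Rabs e * r /\
    Rabs (tx * (y (s + e) - y s) - ty * (x (s + e) - x s)) <= Rabs e * r.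
Proof.
  intros Dx Dy r Hr.
  set (M := Rabs tx + Rabs ty + 1).
  assert (HM : 0 < M) by (unfold M; pose proof (Rabs_pos tx); pose proof (Rabs_pos ty); lra).
  destruct (Dx (r / M) ltac:(now apply Rdiv_lt_0_compat)) as [dx Hdx].
  destruct (Dy (r / M) ltac:(now apply Rdiv_lt_0_compat)) as [dy Hdy].
  exists (Rmin dx dy). split; [apply Rmin_glb_lt; apply cond_pos|].
  intros e He He_small.
  specialize (Hdx e He (Rlt_le_trans _ _ _ He_small (Rmin_l _ _))).
  specialize (Hdy e He (Rlt_le_trans _ _ _ He_small (Rmin_r _ _))).
  set (rx := (x (s + e) - x s) / e - tx) in *.
  set (ry := (y (s + e) - y s) / e - ty) in *.
  replace (x (s + e) - x s) with (e * (tx + rx)) by (unfold rx; field; easy).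
  replace (y (s + e) - y s) with (e * (ty + ry)) by (unfold ry; field; easy).
  replace (tx * (e * (tx + rx)) + ty * (e * (ty + ry)) - e * (tx ^ 2 + ty ^ 2))
    with (e * (tx * rx + ty * ry)) by ring.
  replace (tx * (e * (ty + ry)) - ty * (e * (tx + rx))) with (e * (tx * ry - ty * rx))
    by ring.
  rewrite !Rabs_mult.
  assert (Hsmall : forall c d u v, Rabs u < r / M -> Rabs v < r / M ->
            Rabs (c * u) + Rabs (d * v) <= (Rabs c + Rabs d) * (r / M)).
  { intros c d u v Hu Hv. rewrite !Rabs_mult.
    pose proof (Rabs_pos c). pose proof (Rabs_pos d). nra. }
  assert (HrM : (Rabs tx + Rabs ty) * (r / M) <= r).
  { apply (Rmult_le_reg_r M); [easy|].
    replace ((Rabs tx + Rabs ty) * (r / M) * M) with ((Rabs tx + Rabs ty) * r)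
      by (field; lra).
    unfold M. lra. }
  pose proof (Rabs_pos e).
  split; apply Rmult_le_compat_l; try easy.
  - eapply Rle_trans; [apply Rabs_triang|]. pose proof (Hsmall tx ty rx ry Hdx Hdy). lra.
  - unfold Rminus. eapply Rle_trans; [apply Rabs_triang|].
    rewrite Ropp_mult_distr_l. pose proof (Hsmall tx (- ty) ry rx Hdy Hdx) as Hs.
    rewrite Rabs_Ropp in Hs. lra.
Qed.

Lemma tangent_chord_pair (x y : R -> R) (s tx ty r e1 : R) :
  derivable_pt_lim x s tx -> derivable_pt_lim y s ty ->
  (exists eta, 0 < eta /\ forall e, e <> 0 -> Rabs e < eta ->
      0 < tx * (y (s + e) - y s) - ty * (x (s + e) - x s)) ->
  0 < r <= (tx ^ 2 + ty ^ 2) / 2 -> 0 < e1 ->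
  exists eps, 0 < eps < e1 /\
    tx * (x (s + - eps) - x s) + ty * (y (s + - eps) - y s) <= - (eps * (tx ^ 2 + ty ^ 2) / 2) /\
    eps * (tx ^ 2 + ty ^ 2) / 2 <= tx * (x (s + eps) - x s) + ty * (y (s + eps) - y s) /\
    0 < tx * (y (s + - eps) - y s) - ty * (x (s + - eps) - x s) <= eps * r /\
    0 < tx * (y (s + eps) - y s) - ty * (x (s + eps) - x s) <= eps * r.
Proof.
  intros Dx Dy [e2 [He2 Hleft]] Hr He1.
  destruct (chord_tangent_expansion x y s tx ty Dx Dy r ltac:(lra)) as [e3 [He3 Hexp]].
  set (eps := Rmin e1 (Rmin e2 e3) / 2).
  assert (Heps : 0 < eps /\ eps < e1 /\ eps < e2 /\ eps < e3).
  { unfold eps, Rmin. repeat destruct Rle_dec; lra. }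
  assert (Habs : Rabs eps = eps /\ Rabs (- eps) = eps) by (rewrite Rabs_Ropp, Rabs_pos_eq; lra).
  destruct (Hexp eps ltac:(lra) ltac:(lra)) as [Ha2 Hb2].
  destruct (Hexp (- eps) ltac:(lra) ltac:(lra)) as [Ha1 Hb1].
  pose proof (Hleft eps ltac:(lra) ltac:(lra)) as Hbe2.
  pose proof (Hleft (- eps) ltac:(lra) ltac:(lra)) as Hbe1.
  destruct Habs as [Habs_p Habs_m]. rewrite Habs_p in Ha2, Hb2. rewrite Habs_m in Ha1, Hb1.
  assert (eps * r <= eps * ((tx ^ 2 + ty ^ 2) / 2)) by (apply Rmult_le_compat_l; lra).
  apply Rabs_le_between in Ha1, Ha2, Hb1, Hb2.
  exists eps. repeat split; lra.
Qed.

Lemma orient_in_frame tx ty (A B Z : pt) :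
  (tx ^ 2 + ty ^ 2) * orient A B Z =
  (tx * (fst A - fst Z) + ty * (snd A - snd Z)) * (tx * (snd B - snd Z) - ty * (fst B - fst Z)) -
  (tx * (snd A - snd Z) - ty * (fst A - fst Z)) * (tx * (fst B - fst Z) + ty * (snd B - snd Z)).
Proof. unfold orient, det2, vsub. simpl. ring. Qed.

Lemma frame_triangle_clockwise al1 be1 al2 be2 aP bP k r :
  al1 <= - k -> k <= al2 -> 0 < be1 <= r -> 0 < be2 <= r -> bP < 0 ->
  r * Rabs aP < k * - bP ->
  al1 * be2 - be1 * al2 < 0 /\ al2 * bP - be2 * aP < 0 /\ aP * be1 - bP * al1 < 0.
Proof.
  intros Hal1 Hal2 Hbe1 Hbe2 HbP Hsmall.
  assert (HaP : - Rabs aP <= aP <= Rabs aP) by (apply Rabs_le_between; lra).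
  assert (0 < k) by (pose proof (Rabs_pos aP); nra).
  repeat split; nra.
Qed.

(* A boundary point P of K on the strict right of the tangent at x(s), together with the
   curve points x(s - eps) and x(s + eps), would enclose x(s) in a clockwise triangle of
   adherent points, so that x(s) would be interior to K. *)
Lemma supporting_tangent (K : pt -> Prop) (x y : R -> R) (tx ty s : R) :
  convex_set K ->
  derivable_pt_lim x s tx -> derivable_pt_lim y s ty -> 0 < tx ^ 2 + ty ^ 2 ->
  (exists eta, 0 < eta /\ forall t, Rabs (t - s) < eta -> boundary K (x t, y t)) ->
  (exists eta, 0 < eta /\ forall e, e <> 0 -> Rabs e < eta ->
      0 < tx * (y (s + e) - y s) - ty * (x (s + e) - x s)) ->
  forall P, boundary K P -> 0 <= tx * (snd P - y s) - ty * (fst P - x s).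
Proof.
  intros Hconv Dx Dy Ht [e1 [He1 Hbd]] Hleft P HP.
  apply Rnot_lt_le. intros HbP.
  set (t2 := tx ^ 2 + ty ^ 2) in *.
  set (aP := tx * (fst P - x s) + ty * (snd P - y s)).
  set (bP := tx * (snd P - y s) - ty * (fst P - x s)) in *.
  pose proof (Rabs_pos aP).
  set (r := Rmin (t2 / 2) (t2 * - bP / (2 * (Rabs aP + 1)))).
  assert (Hr : 0 < r <= t2 / 2).
  { split; [apply Rmin_glb_lt; apply Rdiv_lt_0_compat; nra|apply Rmin_l]. }
  assert (Hr2 : r * Rabs aP < t2 / 2 * - bP).
  { assert (Hle : r <= t2 * - bP / (2 * (Rabs aP + 1))) by apply Rmin_r.
    apply (Rmult_le_compat_r (Rabs aP + 1)) in Hle; [|lra].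
    replace (t2 * - bP / (2 * (Rabs aP + 1)) * (Rabs aP + 1)) with (t2 / 2 * - bP)
      in Hle by (field; lra).
    assert (0 < t2 * - bP) by (apply Rmult_lt_0_compat; lra). nra. }
  destruct (tangent_chord_pair x y s tx ty r e1 Dx Dy Hleft Hr He1)
    as [eps [Heps [Hal1 [Hal2 [Hbe1 Hbe2]]]]]. fold t2 in Hal1, Hal2.
  set (A1 := (x (s + - eps), y (s + - eps))).
  set (A2 := (x (s + eps), y (s + eps))).
  set (Z := (x s, y s)).
  assert (Hneg : forall A B, t2 * orient A B Z < 0 -> orient A B Z < 0) by (intros; nra).
  destruct (frame_triangle_clockwise _ _ _ _ aP bP (eps * t2 / 2) (eps * r)
              Hal1 Hal2 Hbe1 Hbe2 HbP) as [o12 [o2P oP1]].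
  { apply (Rmult_lt_compat_l eps) in Hr2; lra. }
  destruct (convex_triangle_interior K A1 A2 P Z Hconv) as [e [He Hint]].
  - apply boundary_adherent, Hbd. replace (s + - eps - s) with (- eps) by ring.
    rewrite Rabs_Ropp, Rabs_pos_eq; lra.
  - apply boundary_adherent, Hbd. replace (s + eps - s) with eps by ring.
    rewrite Rabs_pos_eq; lra.
  - now apply boundary_adherent.
  - apply Hneg. unfold t2. now rewrite orient_in_frame.
  - apply Hneg. unfold t2. now rewrite orient_in_frame.
  - apply Hneg. unfold t2. now rewrite orient_in_frame.
  - destruct (Hbd s ltac:(rewrite Rminus_diag, Rabs_R0; lra) e He) as [_ [Q [HQ DQ]]].
    exact (HQ (Hint Q DQ)).
Qed.

Lemma pos_near_double_zero (f g : R -> R) (c : R) :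
  (forall h, is_derive f h (g h)) -> f 0 = 0 -> g 0 = 0 -> is_derive g 0 c -> 0 < c ->
  exists eta, 0 < eta /\ forall e, e <> 0 -> Rabs e < eta -> 0 < f e.
Proof.
  intros Df f0 g0 Dg Hc.
  apply is_derive_Reals in Dg.
  destruct (Dg (c / 2) ltac:(lra)) as [del Hdel].
  assert (Hsign : forall h, h <> 0 -> Rabs h < del -> 0 < g h / h).
  { intros h Hh Hh_small. specialize (Hdel h Hh Hh_small).
    rewrite Rplus_0_l, g0, Rminus_0_r in Hdel. apply Rabs_def2 in Hdel. lra. }
  assert (gpos : forall h, 0 < h < del -> 0 < g h).
  { intros h Hh. specialize (Hsign h ltac:(lra) ltac:(rewrite Rabs_pos_eq; lra)).
    apply Rdiv_pos_cases in Hsign. lra. }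
  assert (gneg : forall h, - del < h < 0 -> g h < 0).
  { intros h Hh. specialize (Hsign h ltac:(lra) ltac:(rewrite Rabs_left; lra)).
    apply Rdiv_pos_cases in Hsign. lra. }
  exists del. split; [apply cond_pos|]. intros e He He_small.
  destruct (Rlt_or_le 0 e) as [Hpos|Hneg].
  - rewrite Rabs_pos_eq in He_small by lra.
    assert (f 0 <= f (e / 2)).
    { apply (le_of_derive_nonneg f g); [intros; apply Df|lra|].
      intros t Ht. destruct (Req_dec t 0) as [->|]; [lra|]. apply Rlt_le, gpos. lra. }
    assert (f (e / 2) < f e).
    { apply (lt_of_derive_pos f g); [intros; apply Df|lra|].
      intros t Ht. apply gpos. lra. }
    lra.
  - rewrite Rabs_left in He_small by lra.
    assert (Dopp : forall h, is_derive (fun h => - f h) h (- g h))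
      by (intros h; exact (is_derive_opp f h (g h) (Df h))).
    assert (- f e < - f (e / 2)).
    { apply (lt_of_derive_pos (fun h => - f h) (fun h => - g h)); [intros; apply Dopp|lra|].
      intros t Ht. assert (g t < 0) by (apply gneg; lra). lra. }
    assert (- f (e / 2) <= - f 0).
    { apply (le_of_derive_nonneg (fun h => - f h) (fun h => - g h));
        [intros; apply Dopp|lra|].
      intros t Ht. destruct (Req_dec t 0) as [->|]; [lra|].
      assert (g t < 0) by (apply gneg; lra). lra. }
    lra.
Qed.

Lemma local_left_turn x y x1 y1 x2 y2 s :
  second_derivatives x y x1 y1 x2 y2 -> 0 < x1 s * y2 s - y1 s * x2 s ->
  exists eta, 0 < eta /\ forall e, e <> 0 -> Rabs e < eta ->
    0 < x1 s * (y (s + e) - y s) - y1 s * (x (s + e) - x s).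
Proof.
  intros derivs Hturn.
  apply (pos_near_double_zero _ (fun h => x1 s * y1 (s + h) - y1 s * x1 (s + h))
           (x1 s * y2 s - y1 s * x2 s)); try easy.
  - intros h. destruct (derivs (s + h)) as [Dx [Dy _]].
    auto_derive.
    + split; [now exists (y1 (s + h))|split; [now exists (x1 (s + h))|easy]].
    + replace (Derive (fun t : R => y t) (s + h)) with (y1 (s + h))
        by (symmetry; now apply is_derive_unique).
      replace (Derive (fun t : R => x t) (s + h)) with (x1 (s + h))
        by (symmetry; now apply is_derive_unique).
      ring.
  - rewrite Rplus_0_r. ring.
  - rewrite Rplus_0_r. ring.
  - destruct (derivs (s + 0)) as [_ [_ [Dx1 Dy1]]].
    auto_derive.
    + split; [now exists (y2 (s + 0))|split; [now exists (x2 (s + 0))|easy]].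
    + replace (Derive (fun t : R => y1 t) (s + 0)) with (y2 (s + 0))
        by (symmetry; now apply is_derive_unique).
      replace (Derive (fun t : R => x1 t) (s + 0)) with (x2 (s + 0))
        by (symmetry; now apply is_derive_unique).
      rewrite Rplus_0_r. ring.
Qed.

Lemma sum_sq_pos_of_neq_0 u v : (u, v) <> (0, 0) -> 0 < u ^ 2 + v ^ 2.
Proof.
  intros Huv. destruct (Req_dec u 0) as [->|Hu].
  - destruct (Req_dec v 0) as [->|Hv]; [easy|].
    pose proof (pow2_gt_0 v Hv). lra.
  - pose proof (pow2_gt_0 u Hu). pose proof (pow2_ge_0 v). lra.
Qed.

Lemma radius_le_of_curvature x1 y1 x2 y2 R2 t :
  (x1 t, y1 t) <> (0, 0) -> 0 < curvature x1 y1 x2 y2 t ->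
  1 / curvature x1 y1 x2 y2 t <= R2 ->
  radius_le x1 y1 x2 y2 R2 t /\ 0 < x1 t * y2 t - y1 t * x2 t.
Proof.
  intros Hreg Hk Hrho. apply sum_sq_pos_of_neq_0 in Hreg.
  pose proof (speed_pos x1 y1 t Hreg) as Hs.
  assert (Hs3 : 0 < speed x1 y1 t ^ 3) by now apply pow_lt.
  unfold curvature in *. set (d := x1 t * y2 t - y1 t * x2 t) in *.
  assert (Hd : 0 < d).
  { unfold Rdiv in Hk. pose proof (Rinv_0_lt_compat _ Hs3). nra. }
  replace (1 / (d / speed x1 y1 t ^ 3)) with (speed x1 y1 t ^ 3 / d) in Hrho
    by (field; lra).
  repeat split; try easy.
  apply (Rmult_le_reg_r (/ d)); [now apply Rinv_0_lt_compat|]. fold d.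
  replace (R2 * d * / d) with R2 by (field; lra). exact Hrho.
Qed.

Lemma is_derive_periodic (f df : R -> R) (T : R) :
  (forall t, f (t + T) = f t) -> (forall t, is_derive f t (df t)) ->
  forall t, df (t + T) = df t.
Proof.
  intros Hper Hf t.
  assert (Hshift : is_derive f t (df (t + T))).
  { apply (is_derive_ext (fun s => f (s + T))); [intros; apply Hper|].
    apply (is_derive_eq _ _ (scal 1 (df (t + T)))).
    - apply (is_derive_comp f (fun s => s + T)); [apply Hf|].
      auto_derive; [easy|ring].
    - unfold scal; simpl; unfold mult; simpl. ring. }
  now rewrite <- (is_derive_unique _ _ _ Hshift), (is_derive_unique _ _ _ (Hf t)).
Qed.

Section ClosedCurve.
Variables (x y x1 y1 x2 y2 : R -> R) (a b R2 : R).
Hypothesis derivs : second_derivatives x y x1 y1 x2 y2.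
Hypothesis R2_pos : 0 < R2.
Hypothesis bending : forall t, a <= t <= b ->
  radius_le x1 y1 x2 y2 R2 t /\ 0 < x1 t * y2 t - y1 t * x2 t.
Hypothesis closed : closed_convex_curve x y a b.

Let P := b - a.

Lemma closed_period_pos : 0 < P.
Proof. destruct closed. unfold P. lra. Qed.

Let jet t := (x t, y t, x1 t, y1 t, x2 t, y2 t).

Lemma jet_periodic t : jet (t + P) = jet t.
Proof.
  destruct closed as [_ [Hper _]].
  assert (px : forall t, x (t + P) = x t) by (intros; apply Hper).
  assert (py : forall t, y (t + P) = y t) by (intros; apply Hper).
  pose proof (is_derive_periodic x x1 P px ltac:(intros; apply derivs)) as px1.
  pose proof (is_derive_periodic y y1 P py ltac:(intros; apply derivs)) as py1.
  pose proof (is_derive_periodic x1 x2 P px1 ltac:(intros; apply derivs)) as px2.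
  pose proof (is_derive_periodic y1 y2 P py1 ltac:(intros; apply derivs)) as py2.
  unfold jet. now rewrite px, py, px1, py1, px2, py2.
Qed.

Lemma jet_reduce t : a - P <= t <= b + P -> exists t', a <= t' <= b /\ jet t = jet t'.
Proof.
  intros Ht. pose proof closed_period_pos.
  destruct (Rlt_le_dec t a); [|destruct (Rle_lt_dec t b)].
  - exists (t + P). split; [unfold P in *; lra|]. now rewrite jet_periodic.
  - now exists t.
  - exists (t - P). split; [unfold P in *; lra|].
    rewrite <- (jet_periodic (t - P)). f_equal. ring.
Qed.

Lemma closed_bending t : a - P <= t <= b + P ->
  radius_le x1 y1 x2 y2 R2 t /\ 0 < x1 t * y2 t - y1 t * x2 t.
Proof.
  intros Ht. destruct (jet_reduce t Ht) as [t' [Ht' E]]. unfold jet in E.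
  injection E as Ex Ey Ex1 Ey1 Ex2 Ey2.
  unfold radius_le, speed. rewrite Ex1, Ey1, Ex2, Ey2. now apply bending.
Qed.

Lemma closed_on_curve t : a - P <= t <= b + P -> on_curve x y a b (x t, y t).
Proof.
  intros Ht. destruct (jet_reduce t Ht) as [t' [Ht' E]]. unfold jet in E.
  injection E as Ex Ey _ _ _ _. exists t'. split; [easy|]. now rewrite Ex, Ey.
Qed.

Lemma closed_left_of_tangent s Q : a - P <= s <= b + P -> on_curve x y a b Q ->
  left_of_tangent x y x1 y1 s Q.
Proof.
  intros Hs HQ. pose proof closed_period_pos.
  destruct (jet_reduce s Hs) as [s' [Hs' E]]. unfold jet in E.
  injection E as Ex Ey Ex1 Ey1 _ _. unfold left_of_tangent. rewrite Ex, Ey, Ex1, Ey1.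
  destruct closed as [_ [_ [_ [K [Kconv [_ [_ Kbd]]]]]]].
  destruct (bending s' Hs') as [[Hreg _] Hturn].
  apply (supporting_tangent K x y (x1 s') (y1 s') s' Kconv); try easy.
  - apply is_derive_Reals, derivs.
  - apply is_derive_Reals, derivs.
  - exists P. split; [easy|]. intros t Ht. apply Kbd, closed_on_curve.
    apply Rabs_def2 in Ht. lra.
  - now apply local_left_turn with x2 y2.
  - now apply Kbd.
Qed.

Lemma closed_chord_dir p q sg : a <= p <= b -> a - P <= q <= b + P ->
  (sg = 1 \/ sg = -1) -> 0 < sg * (q - p) ->
  0 < sg * (tangent_x x1 y1 p * (x q - x p) + tangent_y x1 y1 p * (y q - y p)) ->
  chord_in_parabola x y x1 y1 R2 p q.
Proof.
  intros Hp Hq Hsg Hdir Hpos. pose proof closed_period_pos.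
  apply (chord_in_parabola_dir x y x1 y1 x2 y2 R2 derivs R2_pos p q sg); try easy.
  - intros t Ht. apply closed_bending.
    unfold Rmin, Rmax in Ht. destruct Rle_dec; lra.
  - intros s Hs. apply closed_left_of_tangent; [|now apply closed_on_curve].
    unfold Rmin, Rmax in Hs. destruct Rle_dec; lra.
Qed.

Theorem closed_chord_in_parabola p q : a <= p <= b -> a <= q <= b ->
  chord_in_parabola x y x1 y1 R2 p q.
Proof.
  intros Hp Hq. pose proof closed_period_pos as HP.
  set (g q := tangent_x x1 y1 p * (x q - x p) + tangent_y x1 y1 p * (y q - y p)).
  assert (Hshift : forall q', jet q' = jet q ->
            chord_in_parabola x y x1 y1 R2 p q' -> chord_in_parabola x y x1 y1 R2 p q).
  { intros q' E. unfold jet in E. injection E as Ex Ey _ _ _ _.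
    unfold chord_in_parabola. now rewrite Ex, Ey. }
  assert (Hg_shift : forall q', jet q' = jet q -> g q' = g q).
  { intros q' E. unfold jet in E. injection E as Ex Ey _ _ _ _. unfold g. now rewrite Ex, Ey. }
  assert (Hend : x b = x a /\ y b = y a).
  { pose proof (jet_periodic a) as E. unfold jet, P in E.
    replace (a + (b - a)) with b in E by ring. now injection E as Ex Ey _ _ _ _. }
  destruct (Rtotal_order (g q) 0) as [Hneg|[Hzero|Hpos]].
  - destruct (Rlt_le_dec q p).
    + apply (closed_chord_dir p q (-1)); try lra. fold (g q). lra.
    + assert (Hq' : q - P < p).
      { unfold P. apply Rnot_le_lt. intros Hle.
        assert (q = b /\ p = a) as [-> ->] by lra.
        unfold g in Hneg. destruct Hend as [Ex Ey]. rewrite Ex, Ey in Hneg. lra. }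
      assert (Ejet : jet (q - P) = jet q).
      { rewrite <- (jet_periodic (q - P)). f_equal. ring. }
      apply (Hshift (q - P) Ejet).
      apply (closed_chord_dir p (q - P) (-1)); try lra.
      fold (g (q - P)). rewrite (Hg_shift _ Ejet). lra.
  - destruct (bending p Hp) as [[Hreg _] _].
    apply chord_in_parabola_orthogonal; try easy.
    apply closed_left_of_tangent; [lra|]. now exists q.
  - destruct (Rlt_le_dec p q).
    + apply (closed_chord_dir p q 1); try lra. fold (g q). lra.
    + assert (Hq' : p < q + P).
      { unfold P. apply Rnot_le_lt. intros Hle.
        assert (q = a /\ p = b) as [-> ->] by lra.
        unfold g in Hpos. destruct Hend as [Ex Ey]. rewrite Ex, Ey in Hpos. lra. }
      apply (Hshift (q + P)); [apply jet_periodic|].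
      apply (closed_chord_dir p (q + P) 1); try lra.
      fold (g (q + P)). rewrite (Hg_shift _ (jet_periodic q)). lra.
Qed.

End ClosedCurve.

(* Components of a vector D in the frame of a unit vector T, expressed through the
   cosine and sine of the angle from a unit vector u to T and the components of D in
   the frame of u. *)
Lemma frame_change ux uy tx ty Dx Dy : ux ^ 2 + uy ^ 2 = 1 ->
  tx * Dx + ty * Dy =
    (ux * tx + uy * ty) * (ux * Dx + uy * Dy) + (ux * ty - uy * tx) * (ux * Dy - uy * Dx) /\
  tx * Dy - ty * Dx =
    - (ux * ty - uy * tx) * (ux * Dx + uy * Dy) + (ux * tx + uy * ty) * (ux * Dy - uy * Dx).
Proof.
  intros Hu. split.
  - transitivity ((tx * Dx + ty * Dy) * (ux ^ 2 + uy ^ 2)); [rewrite Hu|]; ring.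
  - transitivity ((tx * Dy - ty * Dx) * (ux ^ 2 + uy ^ 2)); [rewrite Hu|]; ring.
Qed.

(* The normal component of the chord is at most |be| < 2 de, so its tangential component
   would have to exceed |al| > w. *)
Lemma flat_chord_not_in_parabola (x y x1 y1 : R -> R) (R2 p q ux uy de w : R) :
  0 < x1 p ^ 2 + y1 p ^ 2 -> ux ^ 2 + uy ^ 2 = 1 -> 0 < R2 -> 0 <= w ->
  4 * R2 * de < w ^ 2 ->
  w < Rabs (ux * (x q - x p) + uy * (y q - y p)) ->
  Rabs (ux * (y q - y p) - uy * (x q - x p)) < 2 * de ->
  0 <= (ux * tangent_y x1 y1 p - uy * tangent_x x1 y1 p) *
       (ux * (x q - x p) + uy * (y q - y p)) ->
  ~ chord_in_parabola x y x1 y1 R2 p q.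
Proof.
  intros Hreg Hu HR2 Hw Hwde Hal Hbe Hsign Hpar.
  destruct (unit_tangent x1 y1 p Hreg) as [Ht _].
  unfold chord_in_parabola in Hpar.
  destruct (frame_change ux uy (tangent_x x1 y1 p) (tangent_y x1 y1 p)
              (x q - x p) (y q - y p) Hu) as [Etan Enor].
  rewrite Etan, Enor in Hpar.
  set (tx := tangent_x x1 y1 p) in *. set (ty := tangent_y x1 y1 p) in *.
  set (al := ux * (x q - x p) + uy * (y q - y p)) in *.
  set (be := ux * (y q - y p) - uy * (x q - x p)) in *.
  set (c := ux * tx + uy * ty) in *. set (s := ux * ty - uy * tx) in *.
  assert (Hcs : c ^ 2 + s ^ 2 = 1).
  { unfold c, s. replace (_ ^ 2 + _ ^ 2) with ((tx ^ 2 + ty ^ 2) * (ux ^ 2 + uy ^ 2)) by ring.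
    rewrite Ht, Hu. ring. }
  set (N := - s * al + c * be) in *.
  assert (HN0 : 0 <= N) by (pose proof (pow2_ge_0 (c * al + s * be)); nra).
  assert (Hc1 : Rabs c <= 1) by (apply Rabs_le; pose proof (pow2_ge_0 s); nra).
  assert (HN : N <= Rabs be).
  { assert (c * be <= Rabs be).
    { eapply Rle_trans; [apply RRle_abs|]. rewrite Rabs_mult.
      pose proof (Rabs_pos be). pose proof (Rabs_pos c). nra. }
    unfold N. lra. }
  assert (Hsum : (c * al + s * be) ^ 2 + N ^ 2 = al ^ 2 + be ^ 2).
  { unfold N. replace (al ^ 2 + be ^ 2) with ((c ^ 2 + s ^ 2) * (al ^ 2 + be ^ 2))
      by (rewrite Hcs; ring). ring. }
  assert (N ^ 2 <= be ^ 2) by (rewrite <- (pow2_abs be); nra).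
  assert (w ^ 2 < al ^ 2) by (rewrite <- (pow2_abs al); nra).
  assert (2 * R2 * N < 4 * R2 * de) by nra.
  nra.
Qed.

Lemma continuity_pt_pow (f : R -> R) t n : continuity_pt f t ->
  continuity_pt (fun s => f s ^ n) t.
Proof.
  intros Hf. induction n as [|n IH]; simpl.
  - apply continuity_pt_const. now intros ? ?.
  - now apply (continuity_pt_mult f (fun s => f s ^ n)).
Qed.

Definition clamp (a b t : R) : R := Rmax a (Rmin b t).

Lemma clamp_in a b t : a <= b -> a <= clamp a b t <= b.
Proof. intros. unfold clamp, Rmax, Rmin. repeat destruct Rle_dec; lra. Qed.

Lemma clamp_id a b t : a <= t <= b -> clamp a b t = t.
Proof. intros. unfold clamp, Rmax, Rmin. repeat destruct Rle_dec; lra. Qed.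

Lemma clamp_continuous a b t : a <= b -> continuity_pt (clamp a b) t.
Proof.
  intros Hab eps Heps. exists eps. split; [easy|]. intros u [_ Hu]. simpl in *.
  unfold Rdist in *. eapply Rle_lt_trans; [|exact Hu].
  unfold clamp, Rmax, Rmin. repeat destruct Rle_dec; split_Rabs; lra.
Qed.

Section TurningAngle.
Variables (x y x1 y1 x2 y2 : R -> R) (a b : R).
Hypothesis C2 : C2_param x y x1 y1 x2 y2.
Hypothesis a_lt_b : a < b.
Hypothesis regular : forall t, a <= t <= b -> 0 < x1 t ^ 2 + y1 t ^ 2.
Hypothesis turning : forall t, a <= t <= b -> 0 < x1 t * y2 t - y1 t * x2 t.

Let turn_rate t := (x1 t * y2 t - y1 t * x2 t) / (x1 t ^ 2 + y1 t ^ 2).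
Let kappa_ds t := curvature x1 y1 x2 y2 t * speed x1 y1 t.
(* The integrand is clamped to [a, b] so that it is continuous on all of R. *)
Let theta t := RInt (fun s => kappa_ds (clamp a b s)) a t.

Lemma kappa_ds_turn_rate t : a <= t <= b -> kappa_ds t = turn_rate t.
Proof.
  intros Ht. unfold kappa_ds, turn_rate, curvature. pose proof (regular t Ht).
  pose proof (speed_pos x1 y1 t ltac:(easy)).
  unfold speed in *. rewrite <- (pow2_sqrt (x1 t ^ 2 + y1 t ^ 2)) at 3 by lra.
  field. lra.
Qed.

Lemma kappa_ds_continuous t : a <= t <= b -> continuity_pt kappa_ds t.
Proof.
  intros Ht. pose proof (regular t Ht).
  destruct (C2 t) as [_ [_ [Dx1 [Dy1 [Cx2 Cy2]]]]].
  apply continuity_pt_filterlim in Cx2, Cy2.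
  pose proof (continuity_pt_of_is_derive _ _ _ Dx1) as Cx1.
  pose proof (continuity_pt_of_is_derive _ _ _ Dy1) as Cy1.
  assert (Csp : continuity_pt (speed x1 y1) t).
  { apply (continuity_pt_comp (fun t => x1 t ^ 2 + y1 t ^ 2) sqrt).
    - apply (continuity_pt_plus (fun t => x1 t ^ 2) (fun t => y1 t ^ 2));
        now apply continuity_pt_pow.
    - apply continuity_pt_sqrt. lra. }
  pose proof (speed_pos x1 y1 t ltac:(easy)).
  apply (continuity_pt_mult (fun t => (x1 t * y2 t - y1 t * x2 t) / speed x1 y1 t ^ 3)
           (speed x1 y1)); [|easy].
  apply (continuity_pt_div (fun t => x1 t * y2 t - y1 t * x2 t) (fun t => speed x1 y1 t ^ 3)).
  - apply (continuity_pt_minus (fun t => x1 t * y2 t) (fun t => y1 t * x2 t));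
      now apply continuity_pt_mult.
  - now apply continuity_pt_pow.
  - apply Rgt_not_eq, pow_lt. lra.
Qed.

Lemma clamped_kappa_ds_continuous t : continuous (fun s => kappa_ds (clamp a b s)) t.
Proof.
  apply continuity_pt_filterlim, (continuity_pt_comp (clamp a b) kappa_ds).
  - apply clamp_continuous. lra.
  - apply kappa_ds_continuous, clamp_in. lra.
Qed.

Lemma theta_deriv t : a <= t <= b -> is_derive theta t (turn_rate t).
Proof.
  intros Ht. rewrite <- kappa_ds_turn_rate by easy.
  replace (kappa_ds t) with (kappa_ds (clamp a b t)) by now rewrite clamp_id.
  apply (is_derive_RInt (fun s => kappa_ds (clamp a b s)) theta a t).
  - apply filter_forall. intros s.
    exact (RInt_correct _ a s
             (ex_RInt_continuous _ a s (fun z _ => clamped_kappa_ds_continuous z))).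
  - apply clamped_kappa_ds_continuous.
Qed.

Lemma theta_total : theta b - theta a = total_curvature x1 y1 x2 y2 a b.
Proof.
  unfold theta, total_curvature. rewrite RInt_point, Rminus_0_r.
  apply RInt_ext. intros s Hs.
  unfold Rmin, Rmax in Hs. destruct Rle_dec; [|lra].
  unfold kappa_ds. rewrite clamp_id; lra.
Qed.

Lemma theta_nondecreasing t t' : a <= t -> t <= t' -> t' <= b -> theta t <= theta t'.
Proof.
  intros. apply (le_of_derive_nonneg theta turn_rate); try easy.
  - intros s Hs. apply theta_deriv. lra.
  - intros s Hs. apply Rlt_le, Rdiv_lt_0_compat; [apply turning|apply regular]; lra.
Qed.

Lemma tangent_x_deriv t : a <= t <= b ->
  is_derive (tangent_x x1 y1) t (- turn_rate t * tangent_y x1 y1 t).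
Proof.
  intros Ht. pose proof (regular t Ht).
  destruct (C2 t) as [_ [_ [Dx1 [Dy1 _]]]].
  unfold tangent_x, tangent_y, turn_rate, speed in *. auto_derive.
  - repeat split; try (eexists; eassumption); try nra.
    apply Rgt_not_eq, sqrt_lt_R0. nra.
  - replace (Derive (fun s : R => x1 s) t) with (x2 t) by (symmetry; now apply is_derive_unique).
    replace (Derive (fun s : R => y1 s) t) with (y2 t) by (symmetry; now apply is_derive_unique).
    replace (x1 t * (x1 t * 1) + y1 t * (y1 t * 1)) with (x1 t ^ 2 + y1 t ^ 2) by ring.
    pose proof (sqrt_lt_R0 _ H) as HS. pose proof (pow2_sqrt (x1 t ^ 2 + y1 t ^ 2)) as HS2.
    set (S := sqrt (x1 t ^ 2 + y1 t ^ 2)) in *.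
    rewrite <- HS2 by lra. apply Rminus_diag_uniq.
    match goal with |- ?e = 0 =>
      replace e with (x2 t * (S ^ 2 - (x1 t ^ 2 + y1 t ^ 2)) / S ^ 3) by (field; lra) end.
    rewrite HS2 by lra. field. lra.
Qed.

Lemma tangent_y_deriv t : a <= t <= b ->
  is_derive (tangent_y x1 y1) t (turn_rate t * tangent_x x1 y1 t).
Proof.
  intros Ht. pose proof (regular t Ht).
  destruct (C2 t) as [_ [_ [Dx1 [Dy1 _]]]].
  unfold tangent_x, tangent_y, turn_rate, speed in *. auto_derive.
  - repeat split; try (eexists; eassumption); try nra.
    apply Rgt_not_eq, sqrt_lt_R0. nra.
  - replace (Derive (fun s : R => x1 s) t) with (x2 t) by (symmetry; now apply is_derive_unique).
    replace (Derive (fun s : R => y1 s) t) with (y2 t) by (symmetry; now apply is_derive_unique).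
    replace (x1 t * (x1 t * 1) + y1 t * (y1 t * 1)) with (x1 t ^ 2 + y1 t ^ 2) by ring.
    pose proof (sqrt_lt_R0 _ H) as HS. pose proof (pow2_sqrt (x1 t ^ 2 + y1 t ^ 2)) as HS2.
    set (S := sqrt (x1 t ^ 2 + y1 t ^ 2)) in *.
    rewrite <- HS2 by lra. apply Rminus_diag_uniq.
    match goal with |- ?e = 0 =>
      replace e with (y2 t * (S ^ 2 - (x1 t ^ 2 + y1 t ^ 2)) / S ^ 3) by (field; lra) end.
    rewrite HS2 by lra. field. lra.
Qed.

Lemma is_derive_cos_theta t : a <= t <= b ->
  is_derive (fun s => cos (theta s)) t (- sin (theta t) * turn_rate t).
Proof.
  intros Ht. apply (is_derive_eq _ _ (scal (turn_rate t) (- sin (theta t)))).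
  - apply (is_derive_comp cos theta); [|now apply theta_deriv].
    apply is_derive_Reals, derivable_pt_lim_cos.
  - unfold scal; simpl; unfold mult; simpl. ring.
Qed.

Lemma is_derive_sin_theta t : a <= t <= b ->
  is_derive (fun s => sin (theta s)) t (cos (theta t) * turn_rate t).
Proof.
  intros Ht. apply (is_derive_eq _ _ (scal (turn_rate t) (cos (theta t)))).
  - apply (is_derive_comp sin theta); [|now apply theta_deriv].
    apply is_derive_Reals, derivable_pt_lim_sin.
  - unfold scal; simpl; unfold mult; simpl. ring.
Qed.

Lemma const_of_derive_zero (f df : R -> R) t0 t : a <= t0 <= b -> a <= t <= b ->
  (forall s, a <= s <= b -> is_derive f s (df s)) -> (forall s, a <= s <= b -> df s = 0) ->
  f t = f t0.
Proof.
  intros Ht0 Ht Hf Hdf. destruct (Rle_lt_dec t t0).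
  - apply (eq_of_derive_zero f df); try easy; intros s Hs; [apply Hf|apply Hdf]; lra.
  - symmetry. apply (eq_of_derive_zero f df); try lra; intros s Hs; [apply Hf|apply Hdf]; lra.
Qed.

Lemma tangent_unrotated t0 t : a <= t0 <= b -> a <= t <= b ->
  cos (theta t) * tangent_x x1 y1 t + sin (theta t) * tangent_y x1 y1 t =
  cos (theta t0) * tangent_x x1 y1 t0 + sin (theta t0) * tangent_y x1 y1 t0 /\
  - sin (theta t) * tangent_x x1 y1 t + cos (theta t) * tangent_y x1 y1 t =
  - sin (theta t0) * tangent_x x1 y1 t0 + cos (theta t0) * tangent_y x1 y1 t0.
Proof.
  intros Ht0 Ht.
  set (ex := tangent_x x1 y1). set (ey := tangent_y x1 y1).
  set (dex s := - turn_rate s * ey s). set (dey s := turn_rate s * ex s).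
  split.
  - apply (const_of_derive_zero (fun s => cos (theta s) * ex s + sin (theta s) * ey s)
      (fun s => - sin (theta s) * turn_rate s * ex s + cos (theta s) * dex s +
                (cos (theta s) * turn_rate s * ey s + sin (theta s) * dey s)) t0 t);
      try easy.
    + intros s Hs. eapply is_derive_eq.
      * apply (is_derive_plus (fun s => cos (theta s) * ex s) (fun s => sin (theta s) * ey s)).
        -- apply (is_derive_mult (fun s => cos (theta s)) ex s (- sin (theta s) * turn_rate s) (dex s));
             [now apply is_derive_cos_theta|now apply tangent_x_deriv|apply Rmult_comm].
        -- apply (is_derive_mult (fun s => sin (theta s)) ey s (cos (theta s) * turn_rate s) (dey s));
             [now apply is_derive_sin_theta|now apply tangent_y_deriv|apply Rmult_comm].
      * unfold plus, mult; simpl. ring.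
    + intros s Hs. unfold dex, dey. ring.
  - apply (const_of_derive_zero (fun s => - sin (theta s) * ex s + cos (theta s) * ey s)
      (fun s => - (cos (theta s) * turn_rate s) * ex s + - sin (theta s) * dex s +
                (- sin (theta s) * turn_rate s * ey s + cos (theta s) * dey s)) t0 t);
      try easy.
    + intros s Hs. eapply is_derive_eq.
      * apply (is_derive_plus (fun s => - sin (theta s) * ex s) (fun s => cos (theta s) * ey s)).
        -- apply (is_derive_mult (fun s => - sin (theta s)) ex s (- (cos (theta s) * turn_rate s)) (dex s));
             [|now apply tangent_x_deriv|apply Rmult_comm].
           apply (is_derive_opp (fun s => sin (theta s))). now apply is_derive_sin_theta.
        -- apply (is_derive_mult (fun s => cos (theta s)) ey s (- sin (theta s) * turn_rate s) (dey s));
             [now apply is_derive_cos_theta|now apply tangent_y_deriv|apply Rmult_comm].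
      * unfold plus, mult, opp; simpl. ring.
    + intros s Hs. unfold dex, dey. ring.
Qed.

Lemma tangent_rotation t0 t : a <= t0 <= b -> a <= t <= b ->
  tangent_x x1 y1 t = cos (theta t - theta t0) * tangent_x x1 y1 t0
                      - sin (theta t - theta t0) * tangent_y x1 y1 t0 /\
  tangent_y x1 y1 t = sin (theta t - theta t0) * tangent_x x1 y1 t0
                      + cos (theta t - theta t0) * tangent_y x1 y1 t0.
Proof.
  intros Ht0 Ht. destruct (tangent_unrotated t0 t Ht0 Ht) as [Z1 Z2].
  rewrite cos_minus, sin_minus.
  pose proof (sin2_cos2 (theta t)) as SC. unfold Rsqr in SC.
  set (A := theta t) in *. set (B := theta t0) in *.
  set (ex := tangent_x x1 y1) in *. set (ey := tangent_y x1 y1) in *.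
  split.
  - replace (ex t) with (cos A * (cos A * ex t + sin A * ey t) -
                         sin A * (- sin A * ex t + cos A * ey t))
      by (transitivity ((sin A * sin A + cos A * cos A) * ex t); [|rewrite SC]; ring).
    rewrite Z1, Z2. ring.
  - replace (ey t) with (sin A * (cos A * ex t + sin A * ey t) +
                         cos A * (- sin A * ex t + cos A * ey t))
      by (transitivity ((sin A * sin A + cos A * cos A) * ey t); [|rewrite SC]; ring).
    rewrite Z1, Z2. ring.
Qed.

Theorem turning_angle : exists th : R -> R,
  (forall t t', a <= t -> t <= t' -> t' <= b -> th t <= th t') /\
  th b - th a = total_curvature x1 y1 x2 y2 a b /\
  (forall t0 t, a <= t0 <= b -> a <= t <= b ->
    tangent_x x1 y1 t = cos (th t - th t0) * tangent_x x1 y1 t0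
                        - sin (th t - th t0) * tangent_y x1 y1 t0 /\
    tangent_y x1 y1 t = sin (th t - th t0) * tangent_x x1 y1 t0
                        + cos (th t - th t0) * tangent_y x1 y1 t0).
Proof.
  exists theta. split; [|split].
  - exact theta_nondecreasing.
  - exact theta_total.
  - exact tangent_rotation.
Qed.

End TurningAngle.

Section ConvexArc.
Variables (x y x1 y1 x2 y2 : R -> R) (a b R2 : R).
Hypothesis C2 : C2_param x y x1 y1 x2 y2.
Hypothesis R2_pos : 0 < R2.
Hypothesis bending : forall t, a <= t <= b ->
  radius_le x1 y1 x2 y2 R2 t /\ 0 < x1 t * y2 t - y1 t * x2 t.
Hypothesis arc : convex_arc x y a b.
Hypothesis total_le_PI : total_curvature x1 y1 x2 y2 a b <= PI.

Let derivs := C2_param_second_derivatives x y x1 y1 x2 y2 C2.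

Lemma arc_regular t : a <= t <= b -> 0 < x1 t ^ 2 + y1 t ^ 2.
Proof. intros Ht. now destruct (bending t Ht) as [[? _] _]. Qed.

Lemma arc_left_of_tangent_interior s t : a < s < b -> a <= t <= b ->
  left_of_tangent x y x1 y1 s (x t, y t).
Proof.
  intros Hs Ht. destruct arc as [Hab [_ [K [Kconv [_ Kbd]]]]].
  destruct (bending s ltac:(lra)) as [[Hreg _] Hturn].
  apply (supporting_tangent K x y (x1 s) (y1 s) s Kconv); try easy.
  - apply is_derive_Reals, derivs.
  - apply is_derive_Reals, derivs.
  - exists (Rmin (s - a) (b - s)). split; [apply Rmin_glb_lt; lra|].
    intros t' Ht'. apply Kbd. apply Rabs_def2 in Ht'.
    pose proof (Rmin_l (s - a) (b - s)). pose proof (Rmin_r (s - a) (b - s)). lra.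
  - now apply local_left_turn with x2 y2.
  - now apply Kbd.
Qed.

(* At the endpoints the supporting property follows by continuity. *)
Lemma arc_left_of_tangent s t : a <= s <= b -> a <= t <= b ->
  left_of_tangent x y x1 y1 s (x t, y t).
Proof.
  intros Hs Ht. destruct arc as [Hab _].
  set (f s := x1 s * (y t - y s) - y1 s * (x t - x s)).
  assert (Hf : forall s, continuity_pt f s).
  { intros u. destruct (derivs u) as [Dx [Dy [Dx1 Dy1]]].
    apply continuity_pt_of_is_derive in Dx, Dy, Dx1, Dy1.
    assert (Cst : forall c, continuity_pt (fun _ : R => c) u)
      by (intros c; apply continuity_pt_const; now intros ? ?).
    apply (continuity_pt_minus (fun s => x1 s * (y t - y s)) (fun s => y1 s * (x t - x s)));
      apply continuity_pt_mult; try easy; now apply (continuity_pt_minus (fun _ => _)). }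
  unfold left_of_tangent. simpl. fold (f s).
  apply Rnot_lt_le. intros Hneg.
  destruct (continuity_pt_neg_near f s (Hf s) Hneg) as [e [He Hnear]].
  set (s' := Rmax (a + Rmin e (b - a) / 2) (Rmin (b - Rmin e (b - a) / 2) s)).
  assert (Hmin : 0 < Rmin e (b - a) <= e /\ Rmin e (b - a) <= b - a).
  { split; [split; [apply Rmin_glb_lt; lra|apply Rmin_l]|apply Rmin_r]. }
  assert (Hs' : a < s' < b /\ Rabs (s' - s) < e).
  { unfold s', Rmax, Rmin in *. repeat destruct Rle_dec; split; try split;
      try (apply Rabs_def1); lra. }
  pose proof (arc_left_of_tangent_interior s' t (proj1 Hs') Ht) as Hleft.
  specialize (Hnear s' (proj2 Hs')). unfold left_of_tangent, f in *. simpl in Hleft. lra.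
Qed.

Lemma arc_chord_forward p q : a <= p -> p < q -> q <= b ->
  0 <= tangent_x x1 y1 p * (x q - x p) + tangent_y x1 y1 p * (y q - y p) ->
  chord_in_parabola x y x1 y1 R2 p q.
Proof.
  intros Hp Hpq Hq [Hpos|Hzero].
  - apply (chord_in_parabola_dir x y x1 y1 x2 y2 R2 derivs R2_pos p q 1); try lra.
    + intros t Ht. apply bending. unfold Rmin, Rmax in Ht. destruct Rle_dec; lra.
    + intros s Hs. apply arc_left_of_tangent; unfold Rmin, Rmax in Hs; destruct Rle_dec; lra.
  - apply chord_in_parabola_orthogonal; try easy.
    + apply arc_regular. lra.
    + apply arc_left_of_tangent; lra.
Qed.

Lemma arc_chord_backward p q : a <= q -> q < p -> p <= b ->
  tangent_x x1 y1 p * (x q - x p) + tangent_y x1 y1 p * (y q - y p) <= 0 ->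
  chord_in_parabola x y x1 y1 R2 p q.
Proof.
  intros Hq Hqp Hp [Hneg|Hzero].
  - apply (chord_in_parabola_dir x y x1 y1 x2 y2 R2 derivs R2_pos p q (-1)); try lra.
    + intros t Ht. apply bending. unfold Rmin, Rmax in Ht. destruct Rle_dec; lra.
    + intros s Hs. apply arc_left_of_tangent; unfold Rmin, Rmax in Hs; destruct Rle_dec; lra.
  - apply chord_in_parabola_orthogonal; try easy.
    + apply arc_regular. lra.
    + apply arc_left_of_tangent; lra.
Qed.

Lemma arc_projection_increasing ux uy t1 t2 : a <= t1 -> t1 < t2 -> t2 <= b ->
  (forall t, t1 <= t <= t2 -> 0 < ux * tangent_x x1 y1 t + uy * tangent_y x1 y1 t) ->
  ux * x t1 + uy * y t1 < ux * x t2 + uy * y t2.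
Proof.
  intros H1 H12 H2 Hpos.
  apply (lt_of_derive_pos (fun t => ux * x t + uy * y t) (fun t => ux * x1 t + uy * y1 t));
    try easy.
  - intros t Ht. apply (is_derive_plus (fun t => ux * x t) (fun t => uy * y t));
      apply is_derive_scal, derivs.
  - intros t Ht. pose proof (arc_regular t ltac:(lra)) as Hreg.
    pose proof (speed_pos x1 y1 t Hreg). specialize (Hpos t Ht).
    unfold tangent_x, tangent_y in Hpos.
    replace (ux * x1 t + uy * y1 t)
      with (speed x1 y1 t * (ux * (x1 t / speed x1 y1 t) + uy * (y1 t / speed x1 y1 t)))
      by (field; lra).
    now apply Rmult_lt_0_compat.
Qed.

Lemma arc_tangent_angle ux uy tm : ux ^ 2 + uy ^ 2 = 1 -> a <= tm <= b ->
  0 <= ux * tangent_y x1 y1 tm - uy * tangent_x x1 y1 tm ->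
  exists psi : R -> R,
    0 <= psi tm <= PI /\
    (forall t t', a <= t -> t <= t' -> t' <= b -> psi t <= psi t' <= psi t + PI) /\
    forall t, a <= t <= b ->
      ux * tangent_x x1 y1 t + uy * tangent_y x1 y1 t = cos (psi t) /\
      ux * tangent_y x1 y1 t - uy * tangent_x x1 y1 t = sin (psi t).
Proof.
  intros Hu Htm Hs. destruct arc as [Hab _].
  destruct (turning_angle x y x1 y1 x2 y2 a b C2 Hab arc_regular
              ltac:(intros; now apply bending)) as [th [Hmono [Htot Hrot]]].
  destruct (unit_tangent x1 y1 tm (arc_regular tm Htm)) as [Hunit _].
  set (tx := tangent_x x1 y1 tm) in *. set (ty := tangent_y x1 y1 tm) in *.
  set (c := ux * tx + uy * ty). set (s := ux * ty - uy * tx) in *.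
  assert (Hcs : c ^ 2 + s ^ 2 = 1).
  { unfold c, s. replace (_ ^ 2 + _ ^ 2) with ((tx ^ 2 + ty ^ 2) * (ux ^ 2 + uy ^ 2)) by ring.
    rewrite Hunit, Hu. ring. }
  assert (Hc : -1 <= c <= 1) by (split; nra).
  exists (fun t => acos c + (th t - th tm)). split; [|split].
  - pose proof (acos_bound c). lra.
  - intros t t' H1 H2 H3. split; [pose proof (Hmono t t'); lra|].
    pose proof (Hmono a t ltac:(lra) ltac:(lra) ltac:(lra)).
    pose proof (Hmono t' b ltac:(lra) ltac:(lra) ltac:(lra)). lra.
  - intros t Ht. destruct (Hrot tm t Htm Ht) as [Ex Ey]. fold tx ty in Ex, Ey.
    rewrite Ex, Ey, cos_plus, sin_plus, cos_acos, sin_acos by easy.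
    replace (sqrt (1 - c²)) with s.
    + fold c s. split; unfold c, s; ring.
    + rewrite <- (sqrt_pow2 s) by easy. f_equal. unfold Rsqr. lra.
Qed.

Section FlatChord.
Variables (ux uy de w tm tE : R).
Hypothesis u_unit : ux ^ 2 + uy ^ 2 = 1.
Hypothesis w_nonneg : 0 <= w.
Hypothesis w_large : 4 * R2 * de < w ^ 2.
Hypothesis tm_range : a <= tm <= b.
Hypothesis tE_range : a <= tE <= b.
Hypothesis along_long : w < ux * (x tE - x tm) + uy * (y tE - y tm).
Hypothesis across_short : Rabs (ux * (y tE - y tm) - uy * (x tE - x tm)) < 2 * de.
Hypothesis tangent_turned : 0 <= ux * tangent_y x1 y1 tm - uy * tangent_x x1 y1 tm.

Let c := ux * tangent_x x1 y1 tm + uy * tangent_y x1 y1 tm.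
Let s := ux * tangent_y x1 y1 tm - uy * tangent_x x1 y1 tm.
Let aE := ux * (x tE - x tm) + uy * (y tE - y tm).
Let bE := ux * (y tE - y tm) - uy * (x tE - x tm).

Lemma chord_at_tm_not_in_parabola : ~ chord_in_parabola x y x1 y1 R2 tm tE.
Proof.
  apply (flat_chord_not_in_parabola x y x1 y1 R2 tm tE ux uy de w); try easy.
  - now apply arc_regular.
  - rewrite Rabs_pos_eq; lra.
  - apply Rmult_le_pos; lra.
Qed.

Lemma chord_at_tE_not_in_parabola :
  ux * tangent_y x1 y1 tE - uy * tangent_x x1 y1 tE <= 0 ->
  ~ chord_in_parabola x y x1 y1 R2 tE tm.
Proof.
  intros Hsin. apply (flat_chord_not_in_parabola x y x1 y1 R2 tE tm ux uy de w); try easy.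
  - now apply arc_regular.
  - rewrite Rabs_left; lra.
  - replace (ux * (y tm - y tE) - uy * (x tm - x tE))
      with (- (ux * (y tE - y tm) - uy * (x tE - x tm))) by ring.
    now rewrite Rabs_Ropp.
  - assert (ux * (x tm - x tE) + uy * (y tm - y tE) < 0) by lra. nra.
Qed.

Lemma tangential_at_tm : tangent_x x1 y1 tm * (x tE - x tm) + tangent_y x1 y1 tm * (y tE - y tm)
  = c * aE + s * bE.
Proof. apply (frame_change ux uy _ _ _ _ u_unit). Qed.

Lemma normal_at_tm : s * aE <= c * bE.
Proof.
  pose proof (tangent_normal_nonneg x y x1 y1 tm (x tE, y tE) (arc_regular tm tm_range)
                (arc_left_of_tangent tm tE tm_range tE_range)) as Hn. simpl in Hn.
  rewrite (proj2 (frame_change ux uy _ _ _ _ u_unit)) in Hn. fold c s aE bE in Hn. lra.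
Qed.

Lemma chord_from_tE_tangential psi :
  ux * tangent_x x1 y1 tE + uy * tangent_y x1 y1 tE = cos psi ->
  ux * tangent_y x1 y1 tE - uy * tangent_x x1 y1 tE = sin psi ->
  tangent_x x1 y1 tE * (x tm - x tE) + tangent_y x1 y1 tE * (y tm - y tE)
  = - (cos psi * aE + sin psi * bE).
Proof.
  intros Hc Hs. rewrite (proj1 (frame_change ux uy _ _ (x tm - x tE) (y tm - y tE) u_unit)).
  rewrite Hc, Hs. unfold aE, bE. ring.
Qed.

(* Tangent at tm pointing forward along u, E behind: either the arc advances along u
   all the way from tE to tm, or its tangent at tE has turned by at least PI / 2. *)
Lemma flat_chord_behind : 0 < c -> tE < tm -> False.
Proof.
  intros Hc HtE. pose proof normal_at_tm as Hn.
  pose proof tangent_turned as Hs. pose proof along_long as Ha. fold s in Hs. fold aE in Ha.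
  assert (HbE : 0 <= bE) by nra.
  destruct (arc_tangent_angle ux uy tm u_unit tm_range tangent_turned)
    as [psi [Hpsi_tm [Hmono Hrep]]].
  destruct (Hrep tm tm_range) as [Ec _]. fold c in Ec.
  assert (Hpsi_tm' : psi tm < PI / 2).
  { apply Rnot_le_lt. intros Hle. assert (cos (psi tm) <= 0) by (apply cos_le_0; lra). lra. }
  destruct (Hmono tE tm ltac:(lra) ltac:(lra) ltac:(lra)) as [_ Hspan].
  destruct (Rlt_le_dec (- (PI / 2)) (psi tE)) as [Hgt|Hle].
  - assert (ux * x tE + uy * y tE < ux * x tm + uy * y tm); [|unfold aE in *; lra].
    apply (arc_projection_increasing ux uy tE tm); try lra.
    intros t Ht. rewrite (proj1 (Hrep t ltac:(lra))). apply cos_gt_0.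
    + pose proof (Hmono tE t ltac:(lra) ltac:(lra) ltac:(lra)). lra.
    + pose proof (Hmono t tm ltac:(lra) ltac:(lra) ltac:(lra)). lra.
  - destruct (Hrep tE tE_range) as [EcE EsE].
    assert (Hcos : cos (psi tE) <= 0).
    { rewrite <- (Ropp_involutive (cos (psi tE))), <- neg_cos.
      assert (0 <= cos (psi tE + PI)) by (apply cos_ge_0; lra). lra. }
    assert (Hsin : sin (psi tE) <= 0).
    { rewrite <- (Ropp_involutive (sin (psi tE))), <- neg_sin.
      assert (0 <= sin (psi tE + PI)) by (apply sin_ge_0; lra). lra. }
    apply (chord_at_tE_not_in_parabola ltac:(lra)).
    apply arc_chord_forward; try lra.
    rewrite (chord_from_tE_tangential (psi tE) EcE EsE). nra.
Qed.

Lemma flat_chord_ahead_reversed : c < 0 -> tm < tE -> False.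
Proof.
  intros Hc HtE. pose proof normal_at_tm as Hn.
  pose proof tangent_turned as Hs. pose proof along_long as Ha. fold s in Hs. fold aE in Ha.
  assert (HbE : bE <= 0) by nra.
  destruct (arc_tangent_angle ux uy tm u_unit tm_range tangent_turned)
    as [psi [Hpsi_tm [Hmono Hrep]]].
  destruct (Hrep tm tm_range) as [Ec _]. fold c in Ec.
  assert (Hpsi_tm' : PI / 2 < psi tm).
  { apply Rnot_le_lt. intros Hle. assert (0 <= cos (psi tm)) by (apply cos_ge_0; lra). lra. }
  destruct (Hmono tm tE ltac:(lra) ltac:(lra) ltac:(lra)) as [_ Hspan].
  destruct (Rlt_le_dec (psi tE) (3 * (PI / 2))) as [Hlt|Hge].
  - assert (- ux * x tm + - uy * y tm < - ux * x tE + - uy * y tE); [|unfold aE in *; lra].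
    apply (arc_projection_increasing (- ux) (- uy) tm tE); try lra.
    intros t Ht. destruct (Hrep t ltac:(lra)) as [Et _].
    assert (cos (psi t) < 0); [|lra].
    apply cos_lt_0.
    + pose proof (Hmono tm t ltac:(lra) ltac:(lra) ltac:(lra)). lra.
    + pose proof (Hmono t tE ltac:(lra) ltac:(lra) ltac:(lra)). lra.
  - destruct (Hrep tE tE_range) as [EcE EsE].
    assert (Hcos : 0 <= cos (psi tE)) by (apply cos_ge_0_3PI2; lra).
    assert (Hsin : sin (psi tE) <= 0) by (apply sin_le_0; lra).
    apply (chord_at_tE_not_in_parabola ltac:(lra)).
    apply arc_chord_backward; try lra.
    rewrite (chord_from_tE_tangential (psi tE) EcE EsE). nra.
Qed.

Lemma angle_unit : c ^ 2 + s ^ 2 = 1.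
Proof.
  destruct (unit_tangent x1 y1 tm (arc_regular tm tm_range)) as [Hunit _].
  unfold c, s. replace (_ ^ 2 + _ ^ 2)
    with ((tangent_x x1 y1 tm ^ 2 + tangent_y x1 y1 tm ^ 2) * (ux ^ 2 + uy ^ 2)) by ring.
  rewrite Hunit, u_unit. ring.
Qed.

Theorem arc_no_flat_chord : False.
Proof.
  pose proof normal_at_tm as Hn. pose proof tangential_at_tm as Ht.
  pose proof tangent_turned as Hs. pose proof along_long as Ha. fold s in Hs. fold aE in Ha.
  destruct (Rtotal_order c 0) as [Hc|[Hc|Hc]].
  - destruct (Rlt_le_dec tE tm) as [Hlt|Hge].
    + apply chord_at_tm_not_in_parabola, arc_chord_backward; try lra.
      rewrite Ht. nra.
    + destruct (Req_dec tE tm) as [Heq|Hne]; [|apply flat_chord_ahead_reversed; lra].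
      unfold aE in Ha. rewrite Heq, !Rminus_diag in Ha. lra.
  - pose proof angle_unit. rewrite Hc in *. nra.
  - destruct (Rlt_le_dec tm tE) as [Hlt|Hge].
    + apply chord_at_tm_not_in_parabola, arc_chord_forward; try lra.
      rewrite Ht. nra.
    + destruct (Req_dec tE tm) as [Heq|Hne]; [|apply flat_chord_behind; lra].
      unfold aE in Ha. rewrite Heq, !Rminus_diag in Ha. lra.
Qed.

End FlatChord.

End ConvexArc.

(* The last hypothesis says that the unit tangent at tm is obtained from u by a rotation
   of angle in [0, PI]. *)
Definition no_flat_chord (x y x1 y1 : R -> R) (a b de w : R) : Prop :=
  forall ux uy tm tE, ux ^ 2 + uy ^ 2 = 1 -> a <= tm <= b -> a <= tE <= b ->
    w < ux * (x tE - x tm) + uy * (y tE - y tm) ->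
    Rabs (ux * (y tE - y tm) - uy * (x tE - x tm)) < 2 * de ->
    0 <= ux * tangent_y x1 y1 tm - uy * tangent_x x1 y1 tm -> False.

Lemma convex_curve_no_flat_chord x y x1 y1 x2 y2 a b R1 R2 de w :
  C2_param x y x1 y1 x2 y2 -> regular_on x1 y1 x2 y2 a b ->
  (forall t, a <= t <= b -> 0 < curvature x1 y1 x2 y2 t) ->
  (closed_convex_curve x y a b \/
   (convex_arc x y a b /\ total_curvature x1 y1 x2 y2 a b <= PI)) ->
  0 < R1 -> R1 <= R2 ->
  (forall t, a <= t <= b -> R1 <= 1 / curvature x1 y1 x2 y2 t <= R2) ->
  0 <= w -> 4 * R2 * de < w ^ 2 ->
  no_flat_chord x y x1 y1 a b de w.
Proof.
  intros C2 Hreg Hk Hcurve HR1 HR12 Hrho Hw Hwde ux uy tm tE Hu Htm HtE Hal Hbe Hs.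
  assert (HR2 : 0 < R2) by lra.
  assert (bending : forall t, a <= t <= b ->
            radius_le x1 y1 x2 y2 R2 t /\ 0 < x1 t * y2 t - y1 t * x2 t).
  { intros t Ht. apply radius_le_of_curvature; [apply Hreg| |apply Hrho]; auto. }
  destruct Hcurve as [Hclosed|[Harc Htot]].
  - apply (flat_chord_not_in_parabola x y x1 y1 R2 tm tE ux uy de w); try easy.
    + now destruct (bending tm Htm) as [[? _] _].
    + rewrite Rabs_pos_eq; lra.
    + apply Rmult_le_pos; lra.
    + apply (closed_chord_in_parabola x y x1 y1 x2 y2 a b R2); try easy.
      now apply C2_param_second_derivatives.
  - exact (arc_no_flat_chord x y x1 y1 x2 y2 a b R2 C2 HR2 bending Harc Htot
             ux uy de w tm tE Hu Hw Hwde Htm HtE Hal Hbe Hs).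
Qed.

(* The bound says that k = 2 delta is below dL ^ 2 / (R2 + dL + S) = R2 + dL - S, the
   smaller root of k ^ 2 - 2 (R2 + dL) k + dL ^ 2, i.e. of (dL - k) ^ 2 - 2 R2 k. *)
Lemma delta_bound_quadratic R2 dL de : 0 < R2 -> 0 < dL -> 0 < de ->
  de < dL ^ 2 / (2 * (R2 + dL + sqrt ((R2 + dL) ^ 2 - dL ^ 2))) ->
  0 < dL - 2 * de /\ 4 * R2 * de < (dL - 2 * de) ^ 2.
Proof.
  intros HR HdL Hd Hb.
  set (S := sqrt ((R2 + dL) ^ 2 - dL ^ 2)) in *.
  assert (HS0 : 0 <= S) by apply sqrt_pos.
  assert (HS2 : S ^ 2 = (R2 + dL) ^ 2 - dL ^ 2) by (apply pow2_sqrt; nra).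
  assert (Hk : 2 * de * (R2 + dL + S) < dL ^ 2).
  { apply (Rmult_lt_compat_r (2 * (R2 + dL + S))) in Hb; [|lra].
    unfold Rdiv in Hb. rewrite Rmult_assoc, Rinv_l in Hb by lra. lra. }
  set (s0 := R2 + dL) in *. set (k := 2 * de).
  assert (Hks : k < s0 - S).
  { apply (Rmult_lt_reg_r (s0 + S)); [unfold s0 in *; lra|].
    unfold k. nra. }
  assert (HsS : s0 - S <= dL).
  { assert ((s0 - S) * (s0 + S) = dL ^ 2) by nra.
    apply Rnot_lt_le. intros Hlt.
    assert (dL * dL < (s0 - S) * (s0 + S))
      by (apply Rmult_le_0_lt_compat; unfold s0 in *; lra).
    nra. }
  split; [unfold k in *; lra|].
  assert (0 < (s0 - S - k) * (s0 + S - k)) by (apply Rmult_lt_0_compat; lra).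
  unfold k, s0 in *. nra.
Qed.

Lemma dist2_components ux uy (Q X : pt) de : ux ^ 2 + uy ^ 2 = 1 -> dist2 Q X < de ->
  Rabs (ux * (fst Q - fst X) + uy * (snd Q - snd X)) < de /\
  Rabs (ux * (snd Q - snd X) - uy * (fst Q - fst X)) < de.
Proof.
  intros Hu Hd. unfold dist2 in Hd.
  assert (Hle : forall vx vy, vx ^ 2 + vy ^ 2 = 1 ->
            vx * (fst Q - fst X) + vy * (snd Q - snd X) < de)
    by (intros vx vy Hv; eapply Rle_lt_trans; [apply along_le_norm, Hv|easy]).
  split; apply Rabs_def1.
  - now apply Hle.
  - pose proof (Hle (- ux) (- uy) ltac:(lra)). lra.
  - pose proof (Hle (- uy) ux ltac:(lra)). lra.
  - pose proof (Hle uy (- ux) ltac:(lra)). lra.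
Qed.

(* Three curve points near Xm - p u, Xm, Xm + q u with p, q >= dL: the chord from the
   middle one to one of the outer ones is flat, whichever side its tangent turns to. *)
Lemma no_curve_points_near_line x y x1 y1 a b dL de (Xm : pt) ux uy p q tA tm tB :
  no_flat_chord x y x1 y1 a b de (dL - 2 * de) -> 0 <= dL - 2 * de ->
  ux ^ 2 + uy ^ 2 = 1 -> dL <= p -> dL <= q ->
  a <= tA <= b -> a <= tm <= b -> a <= tB <= b ->
  dist2 (x tA, y tA) (fst Xm - p * ux, snd Xm - p * uy) < de ->
  dist2 (x tm, y tm) Xm < de ->
  dist2 (x tB, y tB) (fst Xm + q * ux, snd Xm + q * uy) < de ->
  False.
Proof.
  intros Hflat Hw Hu Hp Hq HtA Htm HtB DA Dm DB.
  destruct (dist2_components ux uy _ _ de Hu DA) as [HaA HbA].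
  destruct (dist2_components ux uy _ _ de Hu Dm) as [Ham Hbm].
  destruct (dist2_components ux uy _ _ de Hu DB) as [HaB HbB].
  cbn [fst snd] in *.
  apply Rabs_def2 in HaA, HbA, Ham, Hbm, HaB, HbB.
  destruct (Rle_lt_dec 0 (ux * tangent_y x1 y1 tm - uy * tangent_x x1 y1 tm)) as [Hs|Hs].
  - apply (Hflat ux uy tm tB Hu Htm HtB); [|apply Rabs_def1|easy].
    + replace (ux * (x tB - x tm) + uy * (y tB - y tm)) with
        ((ux * (x tB - (fst Xm + q * ux)) + uy * (y tB - (snd Xm + q * uy)))
         - (ux * (x tm - fst Xm) + uy * (y tm - snd Xm)) + q * (ux ^ 2 + uy ^ 2)) by ring.
      rewrite Hu. lra.
    + replace (ux * (y tB - y tm) - uy * (x tB - x tm)) with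
        ((ux * (y tB - (snd Xm + q * uy)) - uy * (x tB - (fst Xm + q * ux)))
         - (ux * (y tm - snd Xm) - uy * (x tm - fst Xm))) by ring. lra.
    + replace (ux * (y tB - y tm) - uy * (x tB - x tm)) with
        ((ux * (y tB - (snd Xm + q * uy)) - uy * (x tB - (fst Xm + q * ux)))
         - (ux * (y tm - snd Xm) - uy * (x tm - fst Xm))) by ring. lra.
  - apply (Hflat (- ux) (- uy) tm tA ltac:(lra) Htm HtA); [|apply Rabs_def1|lra].
    + replace (- ux * (x tA - x tm) + - uy * (y tA - y tm)) with
        (- (ux * (x tA - (fst Xm - p * ux)) + uy * (y tA - (snd Xm - p * uy)))
         + (ux * (x tm - fst Xm) + uy * (y tm - snd Xm)) + p * (ux ^ 2 + uy ^ 2)) by ring.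
      rewrite Hu. lra.
    + replace (- ux * (y tA - y tm) - - uy * (x tA - x tm)) with
        (- (ux * (y tA - (snd Xm - p * uy)) - uy * (x tA - (fst Xm - p * ux)))
         + (ux * (y tm - snd Xm) - uy * (x tm - fst Xm))) by ring. lra.
    + replace (- ux * (y tA - y tm) - - uy * (x tA - x tm)) with
        (- (ux * (y tA - (snd Xm - p * uy)) - uy * (x tA - (fst Xm - p * ux)))
         + (ux * (y tm - snd Xm) - uy * (x tm - fst Xm))) by ring. lra.
Qed.

Definition norm2 (v : pt) : R := sqrt (fst v ^ 2 + snd v ^ 2).

Lemma dist2_norm2 P Q : dist2 P Q = norm2 (vsub P Q).
Proof. reflexivity. Qed.

Lemma dist2_sym P Q : dist2 P Q = dist2 Q P.
Proof. unfold dist2. f_equal. ring. Qed.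

Lemma det2_le_norm2 (u v : pt) : Rabs (det2 u v) <= norm2 u * norm2 v.
Proof.
  unfold norm2, det2. destruct u as [u1 u2], v as [v1 v2]; simpl.
  rewrite <- sqrt_mult by (apply Rplus_le_le_0_compat; apply pow2_ge_0).
  rewrite <- (sqrt_pow2 (Rabs _)) by apply Rabs_pos. apply sqrt_le_1_alt.
  rewrite pow2_abs. pose proof (pow2_ge_0 (u1 * v1 + u2 * v2)).
  replace ((u1 ^ 2 + u2 ^ 2) * (v1 ^ 2 + v2 ^ 2))
    with ((u1 * v2 - u2 * v1) ^ 2 + (u1 * v1 + u2 * v2) ^ 2) by ring.
  lra.
Qed.

Lemma tri_area_perturb (P1 P2 P3 Q1 Q2 Q3 : pt) d AL :
  dist2 P1 Q1 < d -> dist2 P2 Q2 < d -> dist2 P3 Q3 < d ->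
  AL <= Rabs (det2 (vsub Q2 Q1) (vsub Q3 Q1)) ->
  tri_area P1 P2 P3 >= AL / 2 - (dist2 P2 P1 + dist2 P3 P2) * d - 3 / 2 * d ^ 2.
Proof.
  intros H1 H2 H3 HAL.
  rewrite dist2_sym, dist2_norm2 in H1, H2, H3. rewrite !dist2_norm2.
  set (e1 := vsub Q1 P1) in *. set (e2 := vsub Q2 P2) in *. set (e3 := vsub Q3 P3) in *.
  set (U := vsub P2 P1). set (V := vsub P3 P2).
  replace (det2 (vsub Q2 Q1) (vsub Q3 Q1))
    with (det2 (vsub P2 P1) (vsub P3 P1) + (det2 U e3 - det2 U e2) + (det2 e2 V - det2 e1 V)
          + (det2 e2 e3 - det2 e1 e3 + det2 e1 e2)) in HAL
    by (unfold U, V, e1, e2, e3, det2, vsub; simpl; ring).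
  assert (Hbound : forall u v, norm2 v < d -> Rabs (det2 u v) <= norm2 u * d).
  { intros u v Hv. eapply Rle_trans; [apply det2_le_norm2|].
    apply Rmult_le_compat_l; [apply sqrt_pos|lra]. }
  assert (Hswap : forall u v, Rabs (det2 u v) = Rabs (det2 v u)).
  { intros u v. unfold det2. rewrite <- Rabs_Ropp. f_equal. ring. }
  assert (Hn1 : 0 <= norm2 e1) by apply sqrt_pos.
  assert (Hn2 : 0 <= norm2 e2) by apply sqrt_pos.
  pose proof (Hbound U e3 H3). pose proof (Hbound U e2 H2).
  pose proof (Hbound V e2 H2). pose proof (Hbound V e1 H1).
  pose proof (Hbound e2 e3 H3). pose proof (Hbound e1 e3 H3). pose proof (Hbound e1 e2 H2).
  assert (norm2 e1 * d <= d * d) by (apply Rmult_le_compat_r; lra).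
  assert (norm2 e2 * d <= d * d) by (apply Rmult_le_compat_r; lra).
  assert (B : forall r, - Rabs r <= r <= Rabs r) by (intros; apply Rabs_le_between; lra).
  set (D := det2 (vsub P2 P1) (vsub P3 P1)) in *.
  assert (Rabs (D + (det2 U e3 - det2 U e2) + (det2 e2 V - det2 e1 V) +
                (det2 e2 e3 - det2 e1 e3 + det2 e1 e2))
          <= Rabs D + (Rabs (det2 U e3) + Rabs (det2 U e2)) +
             (Rabs (det2 V e2) + Rabs (det2 V e1)) +
             (Rabs (det2 e2 e3) + Rabs (det2 e1 e3) + Rabs (det2 e1 e2))).
  { pose proof (B D). pose proof (B (det2 U e3)). pose proof (B (det2 U e2)).
    pose proof (B (det2 e2 V)). pose proof (B (det2 e1 V)). pose proof (B (det2 e2 e3)).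
    pose proof (B (det2 e1 e3)). pose proof (B (det2 e1 e2)).
    rewrite (Hswap e2 V), (Hswap e1 V) in *. apply Rabs_le. lra. }
  unfold tri_area. fold D. unfold U, V in *. unfold Rdiv. lra.
Qed.

Lemma lattice_det v0 v1 v2 P1 P2 P3 :
  lattice_pt v0 v1 v2 P1 -> lattice_pt v0 v1 v2 P2 -> lattice_pt v0 v1 v2 P3 ->
  exists k : Z, det2 (vsub P2 P1) (vsub P3 P1) = IZR k * det2 v1 v2.
Proof.
  intros [m1 [n1 ->]] [m2 [n2 ->]] [m3 [n3 ->]].
  exists ((m2 - m1) * (n3 - n1) - (n2 - n1) * (m3 - m1))%Z.
  unfold det2, vsub; simpl. rewrite minus_IZR, !mult_IZR, !minus_IZR. ring.
Qed.

Lemma Rabs_IZR_ge_1 k : k <> 0%Z -> 1 <= Rabs (IZR k).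
Proof. intros Hk. rewrite <- abs_IZR. apply IZR_le. lia. Qed.

Definition aligned (X M Y : pt) : Prop :=
  exists ux uy p q, ux ^ 2 + uy ^ 2 = 1 /\ 0 < p /\ 0 < q /\
    X = (fst M - p * ux, snd M - p * uy) /\ Y = (fst M + q * ux, snd M + q * uy).

Lemma collinear_aligned (A B C : pt) : A <> B -> B <> C -> A <> C ->
  det2 (vsub B A) (vsub C A) = 0 -> aligned C A B \/ aligned A B C \/ aligned A C B.
Proof.
  intros HAB HBC HAC Hdet.
  destruct A as [a1 a2], B as [b1 b2], C as [c1 c2]. unfold det2, vsub in Hdet; simpl in Hdet.
  set (v1 := b1 - a1) in *. set (v2 := b2 - a2) in *.
  set (w1 := c1 - a1) in *. set (w2 := c2 - a2) in *.
  assert (Hv : 0 < v1 ^ 2 + v2 ^ 2).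
  { apply sum_sq_pos_of_neq_0. intros E. injection E as E1 E2.
    apply HAB. unfold v1, v2 in *. f_equal; lra. }
  set (n := sqrt (v1 ^ 2 + v2 ^ 2)).
  assert (Hn : 0 < n) by now apply sqrt_lt_R0.
  assert (Hn2 : n ^ 2 = v1 ^ 2 + v2 ^ 2) by (apply pow2_sqrt; lra).
  set (lam := (v1 * w1 + v2 * w2) / (v1 ^ 2 + v2 ^ 2)).
  assert (Hw1 : w1 = lam * v1).
  { unfold lam. apply (Rmult_eq_reg_r (v1 ^ 2 + v2 ^ 2)); [|lra]. field_simplify; [|lra].
    assert (v2 * (v1 * w2 - v2 * w1) = 0) by (rewrite Hdet; ring). nra. }
  assert (Hw2 : w2 = lam * v2).
  { unfold lam. apply (Rmult_eq_reg_r (v1 ^ 2 + v2 ^ 2)); [|lra]. field_simplify; [|lra].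
    assert (v1 * (v1 * w2 - v2 * w1) = 0) by (rewrite Hdet; ring). nra. }
  assert (Hu : (v1 / n) ^ 2 + (v2 / n) ^ 2 = 1) by (field_simplify; [rewrite Hn2; field|]; lra).
  assert (Ec : c1 = a1 + lam * v1 /\ c2 = a2 + lam * v2) by (unfold w1, w2 in *; lra).
  assert (Eb : b1 = a1 + v1 /\ b2 = a2 + v2) by (unfold v1, v2; lra).
  destruct Ec as [Ec1 Ec2], Eb as [Eb1 Eb2].
  destruct (Rtotal_order lam 0) as [Hl|[Hl|Hl]].
  - left. exists (v1 / n), (v2 / n), (- lam * n), n.
    repeat split; try easy; [nra| |]; simpl; rewrite ?Ec1, ?Ec2, ?Eb1, ?Eb2;
      f_equal; field; lra.
  - exfalso. apply HAC. rewrite Ec1, Ec2, Hl. f_equal; ring.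
  - destruct (Rtotal_order lam 1) as [Hl1|[Hl1|Hl1]].
    + right; right. exists (v1 / n), (v2 / n), (lam * n), ((1 - lam) * n).
      repeat split; try easy; try nra; simpl; rewrite ?Ec1, ?Ec2, ?Eb1, ?Eb2;
        f_equal; field; lra.
    + exfalso. apply HBC. rewrite Ec1, Ec2, Eb1, Eb2, Hl1. f_equal; ring.
    + right; left. exists (v1 / n), (v2 / n), n, ((lam - 1) * n).
      repeat split; try easy; try nra; simpl; rewrite ?Ec1, ?Ec2, ?Eb1, ?Eb2;
        f_equal; field; lra.
Qed.

Lemma dist2_shift (M : pt) p ux uy : 0 < p -> ux ^ 2 + uy ^ 2 = 1 ->
  dist2 (fst M - p * ux, snd M - p * uy) M = p /\ dist2 (fst M + p * ux, snd M + p * uy) M = p.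
Proof.
  intros Hp Hu. unfold dist2; cbn [fst snd].
  split; match goal with |- sqrt ?e = p =>
    replace e with (p ^ 2 * (ux ^ 2 + uy ^ 2)) by ring end;
    rewrite Hu, Rmult_1_r; apply sqrt_pow2; lra.
Qed.

Lemma dist2_pos (P Q : pt) : P <> Q -> 0 < dist2 P Q.
Proof.
  intros HPQ. apply sqrt_lt_R0, sum_sq_pos_of_neq_0. intros E. injection E as E1 E2.
  apply HPQ. destruct P, Q; simpl in *. f_equal; lra.
Qed.

Lemma aligned_lattice_points_off_curve x y x1 y1 a b v0 v1 v2 dL de X M Y tX tM tY :
  no_flat_chord x y x1 y1 a b de (dL - 2 * de) -> 0 <= dL - 2 * de ->
  (forall P Q, lattice_pt v0 v1 v2 P -> lattice_pt v0 v1 v2 Q -> P <> Q -> dL <= dist2 P Q) ->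
  lattice_pt v0 v1 v2 X -> lattice_pt v0 v1 v2 M -> lattice_pt v0 v1 v2 Y ->
  aligned X M Y -> a <= tX <= b -> a <= tM <= b -> a <= tY <= b ->
  dist2 (x tX, y tX) X < de -> dist2 (x tM, y tM) M < de -> dist2 (x tY, y tY) Y < de ->
  False.
Proof.
  intros Hflat Hw Hmin LX LM LY [ux [uy [p [q [Hu [Hp [Hq [EX EY]]]]]]]] HtX HtM HtY DX DM DY.
  assert (Hfar : forall Z r, 0 < r -> dist2 Z M = r -> lattice_pt v0 v1 v2 Z -> dL <= r).
  { intros Z r Hr HZ LZ. rewrite <- HZ. apply Hmin; try easy.
    intros ->. unfold dist2 in HZ. rewrite !Rminus_diag in HZ.
    replace (0 ^ 2 + 0 ^ 2) with 0 in HZ by ring. rewrite sqrt_0 in HZ. lra. }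
  apply (no_curve_points_near_line x y x1 y1 a b dL de M ux uy p q tX tM tY); try easy.
  - apply (Hfar X); [easy| |easy]. rewrite EX. now apply dist2_shift.
  - apply (Hfar Y); [easy| |easy]. rewrite EY. now apply dist2_shift.
  - now rewrite <- EX.
  - now rewrite <- EY.
Qed.

Theorem lemma7p5
  (x y x1 y1 x2 y2 : R -> R) (a b R1 R2 : R)
  (v0 v1 v2 : pt) (dL delta : R)
  (P1' P2' P3' P1 P2 P3 : pt) :
  C2_param x y x1 y1 x2 y2 ->
  regular_on x1 y1 x2 y2 a b ->
  (forall t, a <= t <= b -> 0 < curvature x1 y1 x2 y2 t) ->
  (closed_convex_curve x y a b \/
   (convex_arc x y a b /\ total_curvature x1 y1 x2 y2 a b <= PI)) ->
  0 < R1 -> R1 <= R2 ->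
  (forall t, a <= t <= b ->
     R1 <= 1 / curvature x1 y1 x2 y2 t <= R2) ->
  det2 v1 v2 <> 0 ->
  is_lattice_min_dist v0 v1 v2 dL ->
  lattice_pt v0 v1 v2 P1' -> lattice_pt v0 v1 v2 P2' -> lattice_pt v0 v1 v2 P3' ->
  P1' <> P2' -> P2' <> P3' -> P1' <> P3' ->
  0 < delta ->
  delta < dL ^ 2 / (2 * (R2 + dL + sqrt ((R2 + dL) ^ 2 - dL ^ 2))) ->
  Rbar_lt (dist_curve x y a b P1') delta ->
  Rbar_lt (dist_curve x y a b P2') delta ->
  Rbar_lt (dist_curve x y a b P3') delta ->
  on_curve x y a b P1 -> on_curve x y a b P2 -> on_curve x y a b P3 ->
  dist2 P1 P1' < delta -> dist2 P2 P2' < delta -> dist2 P3 P3' < delta ->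
  tri_area P1 P2 P3 >=
    lattice_area v1 v2 / 2 - (dist2 P2 P1 + dist2 P3 P2) * delta
      - 3 / 2 * delta ^ 2.
Proof.
  (* The points P1, P2, P3 themselves witness dist(Pj', C) < delta. *)
  intros C2 Hreg Hk Hcurve HR1 HR12 Hrho Hdet [[Q [Q' [LQ [LQ' [HQQ' HdL]]]]] Hmin]
    L1 L2 L3 N12 N23 N13 Hde Hde_bound _ _ _ [t1 [Ht1 E1]] [t2 [Ht2 E2]] [t3 [Ht3 E3]]
    D1 D2 D3.
  assert (HdL_pos : 0 < dL) by (rewrite <- HdL; now apply dist2_pos).
  destruct (delta_bound_quadratic R2 dL delta ltac:(lra) HdL_pos Hde Hde_bound)
    as [Hw Hwde].
  pose proof (convex_curve_no_flat_chord x y x1 y1 x2 y2 a b R1 R2 delta (dL - 2 * delta)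
                C2 Hreg Hk Hcurve HR1 HR12 Hrho ltac:(lra) Hwde) as Hflat.
  apply (tri_area_perturb P1 P2 P3 P1' P2' P3'); try easy.
  destruct (lattice_det v0 v1 v2 P1' P2' P3' L1 L2 L3) as [k Hk_det].
  rewrite Hk_det, Rabs_mult. unfold lattice_area.
  destruct (Z.eq_dec k 0) as [->|Hk0].
  - exfalso. subst P1 P2 P3.
    destruct (collinear_aligned P1' P2' P3' N12 N23 N13 ltac:(rewrite Hk_det; ring))
      as [Hal|[Hal|Hal]].
    + apply (aligned_lattice_points_off_curve x y x1 y1 a b v0 v1 v2 dL delta
               P3' P1' P2' t3 t1 t2); auto; lra.
    + apply (aligned_lattice_points_off_curve x y x1 y1 a b v0 v1 v2 dL delta
               P1' P2' P3' t1 t2 t3); auto; lra.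
    + apply (aligned_lattice_points_off_curve x y x1 y1 a b v0 v1 v2 dL delta
               P1' P3' P2' t1 t3 t2); auto; lra.
  - pose proof (Rabs_IZR_ge_1 k Hk0). pose proof (Rabs_pos (det2 v1 v2)). nra.
Qed.
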